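(* Let $f,g\in\mathrm{Diffeo}^-(\mathbb{R})$ with $f(0)=g(0)=0$ and $f\circ f=g\circ g$, and suppose $(T_0f)\circ(T_0f)=X$. Suppose $0$ is a boundary point of $\mathrm{fix}(f\circ f)=\{x\in\mathbb{R}: f(f(x))=x\}$. Then there exists $h\in\mathrm{Diffeo}^+(\mathbb{R})$ with $f=h^{-1}\circ g\circ h$ if and only if $T_0f=T_0g$.
   Context: $\mathrm{Diffeo}(\mathbb{R})$ is the group of $C^\infty$ diffeomorphisms of $\mathbb{R}$ under composition; $\mathrm{Diffeo}^+(\mathbb{R})$ (resp. $\mathrm{Diffeo}^-(\mathbb{R})$) is the set of orientation-preserving (resp. orientation-reversing) diffeomorphisms. For a diffeomorphism $\phi$ with $\phi(0)=0$, $T_0\phi=\phi'(0)X+\frac{\phi''(0)}{2}X^2+\cdots$ is its Taylor series at $0$, viewed as a formal power series under formal composition; $X$ denotes the identity series. *)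

From Stdlib Require Import Reals Lra Arith.
From Coquelicot Require Import Coquelicot.
Open Scope R_scope.

Definition smooth (f : R -> R) : Prop := forall (n : nat) (x : R), ex_derive_n f n x.

Definition is_diffeo_with (f finv : R -> R) : Prop :=
  smooth f /\ smooth finv /\ (forall x, finv (f x) = x) /\ (forall x, f (finv x) = x).

Definition is_diffeo (f : R -> R) : Prop := exists finv, is_diffeo_with f finv.

Definition diffeo_plus (f : R -> R) : Prop :=
  is_diffeo f /\ (forall x y, x < y -> f x < f y).
Definition diffeo_minus (f : R -> R) : Prop :=
  is_diffeo f /\ (forall x y, x < y -> f y < f x).

Definition fps := nat -> R.

Definition fps_one : fps := fun n => if Nat.eqb n 0 then 1 else 0.
Definition fps_X : fps := fun n => if Nat.eqb n 1 then 1 else 0.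

Definition fps_mul (a b : fps) : fps :=
  fun n => sum_f_R0 (fun k => a k * b (n - k)%nat) n.

Fixpoint fps_pow (a : fps) (k : nat) : fps :=
  match k with
  | O => fps_one
  | S k' => fps_mul a (fps_pow a k')
  end.

(* formal composition a o b, meaningful when b 0 = 0 (then (b^k)_n = 0 for k > n) *)
Definition fps_comp (a b : fps) : fps :=
  fun n => sum_f_R0 (fun k => a k * fps_pow b k n) n.

Definition taylor0 (f : R -> R) : fps :=
  fun n => Derive_n f n 0 / INR (fact n).

Definition boundary_point (S : R -> Prop) (x : R) : Prop :=
  (forall eps, 0 < eps -> exists y, Rabs (y - x) < eps /\ S y) /\
  (forall eps, 0 < eps -> exists y, Rabs (y - x) < eps /\ ~ S y).

(* If [f = h^-1 o g o h] with [h] increasing, then [h 0 = 0] and [h] commutes with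
   [F = f o f = g o g].  Since [T_0 F = X], [F - id] is flat at [0], while [F] is not the
   identity near [0+].  Such an [F] forces [T_0 h = X]: otherwise, replacing [h] by its
   inverse if needed, [h] is near [0+] a contraction [y - a y^(p+1) + ...] (or has
   [0 < h'(0) < 1]).  Along the orbits [u_n = h^n x0] and [h^n (F x0) = F u_n] of a point
   with [F x0 <> x0], the gap shrinks no faster than [prod (1 - B u_j^p)], whereas [u_n]
   shrinks at least like [prod (1 - a u_j^p)] and flatness makes the gap [O(u_n^N)] for
   every [N]; hence [prod (1 + u_j^p)] is bounded, [u_n] stays away from [0], contradicting
   [u_(n+1) <= u_n - a u_n^(p+1)].  Then [T_0 g = T_0 (h o f o h^-1) = T_0 f].
   Conversely, if [T_0 f = T_0 g], the map equal to [g^-1 o f] on the negative axis and to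
   the identity on the positive axis is smooth (all derivatives agree at [0]), increasing,
   and conjugates [f] to [g] because [f o f = g o g]. *)

From Stdlib Require Import Reals Lra Lia FunctionalExtensionality.
From Coquelicot Require Import Coquelicot.
Open Scope R_scope.

(** * Smooth functions *)

Definition Cn (n : nat) (u : R -> R) : Prop :=
  forall k, (k <= n)%nat -> forall x, ex_derive_n u k x.

Lemma Derive_n_S_Derive (u : R -> R) k x :
  Derive_n u (S k) x = Derive_n (Derive u) k x.
Proof.
  replace (S k) with (k + 1)%nat by lia. now rewrite <- (Derive_n_comp u k 1).
Qed.

Lemma Cn_ext n u v : Cn n u -> (forall x, u x = v x) -> Cn n v.
Proof. intros Hu E k Hk x. apply (ex_derive_n_ext u v); auto. Qed.

Lemma Cn_le n m u : (m <= n)%nat -> Cn n u -> Cn m u.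
Proof. intros Hm Hu k Hk x. apply Hu. lia. Qed.

Lemma Cn_0 u : Cn 0 u.
Proof. intros k Hk x. destruct k; [exact I | lia]. Qed.

Lemma Cn_S n u : Cn (S n) u <-> (forall x, ex_derive u x) /\ Cn n (Derive u).
Proof.
  split.
  - intros Hu. split.
    + intros x. exact (Hu 1%nat ltac:(lia) x).
    + intros [|k] Hk x; [exact I |].
      apply (ex_derive_ext (Derive_n u (S k))).
      * intros t. apply Derive_n_S_Derive.
      * exact (Hu (S (S k)) ltac:(lia) x).
  - intros [Hu1 Hu2] [|[|k]] Hk x; [exact I | exact (Hu1 x) |].
    apply (ex_derive_ext (Derive_n (Derive u) k)).
    + intros t. symmetry. apply Derive_n_S_Derive.
    + exact (Hu2 (S k) ltac:(lia) x).
Qed.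

Lemma smooth_Cn u : smooth u <-> forall n, Cn n u.
Proof.
  split.
  - intros Hu n k _ x. apply Hu.
  - intros Hu n x. exact (Hu n n (le_n n) x).
Qed.

Lemma Cn_const n c : Cn n (fun _ => c).
Proof. intros k _ x. apply ex_derive_n_const. Qed.

Lemma Cn_id n : Cn n (fun x => x).
Proof.
  destruct n; [apply Cn_0 |]. apply Cn_S. split.
  - intros; apply ex_derive_id.
  - apply (Cn_ext n (fun _ => 1)); [apply Cn_const |].
    intros; symmetry; apply Derive_id.
Qed.

Lemma Cn_plus n : forall u v, Cn n u -> Cn n v -> Cn n (fun x => u x + v x).
Proof.
  induction n as [|n IH]; intros u v Hu Hv; [apply Cn_0 |].
  apply Cn_S in Hu as [Hu1 Hu2]. apply Cn_S in Hv as [Hv1 Hv2].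
  apply Cn_S. split.
  - intros x. now apply (ex_derive_plus u v).
  - apply (Cn_ext n (fun x => Derive u x + Derive v x)); auto.
    intros x. symmetry. now apply Derive_plus.
Qed.

Lemma Cn_mult n : forall u v, Cn n u -> Cn n v -> Cn n (fun x => u x * v x).
Proof.
  induction n as [|n IH]; intros u v Hu Hv; [apply Cn_0 |].
  pose proof (Cn_le (S n) n u ltac:(lia) Hu) as Hu'.
  pose proof (Cn_le (S n) n v ltac:(lia) Hv) as Hv'.
  apply Cn_S in Hu as [Hu1 Hu2]. apply Cn_S in Hv as [Hv1 Hv2].
  apply Cn_S. split.
  - intros x. now apply ex_derive_mult.
  - apply (Cn_ext n (fun x => Derive u x * v x + u x * Derive v x)).
    + apply Cn_plus; auto.
    + intros x. symmetry. now apply Derive_mult.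
Qed.

Lemma Cn_comp n : forall u v, Cn n u -> Cn n v -> Cn n (fun x => u (v x)).
Proof.
  induction n as [|n IH]; intros u v Hu Hv; [apply Cn_0 |].
  pose proof (Cn_le (S n) n v ltac:(lia) Hv) as Hv'.
  apply Cn_S in Hu as [Hu1 Hu2]. apply Cn_S in Hv as [Hv1 Hv2].
  apply Cn_S. split.
  - intros x. now apply (ex_derive_comp u v x).
  - apply (Cn_ext n (fun x => Derive v x * Derive u (v x))).
    + apply Cn_mult; auto.
    + intros x. symmetry. now apply Derive_comp.
Qed.

Lemma smooth_comp u v : smooth u -> smooth v -> smooth (fun x => u (v x)).
Proof. rewrite !smooth_Cn. intros; now apply Cn_comp. Qed.

Lemma smooth_id : smooth (fun x => x).
Proof. apply smooth_Cn, Cn_id. Qed.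

Lemma smooth_Derive u : smooth u -> smooth (Derive u).
Proof. rewrite !smooth_Cn. intros Hu n. now apply (Cn_S n u). Qed.

Lemma smooth_Derive_n u n : smooth u -> smooth (Derive_n u n).
Proof.
  intros Hu. induction n as [|n IH]; [exact Hu |].
  exact (smooth_Derive _ IH).
Qed.

Lemma smooth_ex_derive u x : smooth u -> ex_derive u x.
Proof. intros Hu. exact (Hu 1%nat x). Qed.

Lemma smooth_continuity_pt u x : smooth u -> continuity_pt u x.
Proof.
  intros Hu. apply continuity_pt_filterlim.
  apply (ex_derive_continuous (K := R_AbsRing) (V := R_NormedModule)).
  now apply smooth_ex_derive.
Qed.

Lemma smooth_scal_arg u c : smooth u -> smooth (fun t => u (c * t)).
Proof.
  intros Hu. apply smooth_comp; [exact Hu |].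
  intros n x. apply ex_derive_n_scal_l, smooth_id.
Qed.

(** * Flat gluing at 0 *)

Definition glue (u v : R -> R) (x : R) : R := if Rle_dec 0 x then v x else u x.

Lemma glue_nonneg u v x : 0 <= x -> glue u v x = v x.
Proof. unfold glue; destruct (Rle_dec 0 x); lra. Qed.

Lemma glue_neg u v x : x < 0 -> glue u v x = u x.
Proof. unfold glue; destruct (Rle_dec 0 x); lra. Qed.

Lemma is_derive_glue0 u v l : is_derive u 0 l -> is_derive v 0 l -> u 0 = v 0 ->
  is_derive (glue u v) 0 l.
Proof.
  rewrite !is_derive_Reals. intros Hu Hv E eps Heps.
  destruct (Hu eps Heps) as [d1 H1]. destruct (Hv eps Heps) as [d2 H2].
  assert (Hd : 0 < Rmin d1 d2) by (apply Rmin_pos; apply cond_pos).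
  exists (mkposreal _ Hd). intros h Hh Hlt. simpl in Hlt.
  specialize (H1 h Hh (Rlt_le_trans _ _ _ Hlt (Rmin_l _ _))).
  specialize (H2 h Hh (Rlt_le_trans _ _ _ Hlt (Rmin_r _ _))).
  rewrite Rplus_0_l in H1, H2 |- *. rewrite (glue_nonneg u v 0) by lra.
  destruct (Rle_dec 0 h).
  - now rewrite glue_nonneg.
  - now rewrite glue_neg, <- E by lra.
Qed.

Lemma is_derive_glue u v : smooth u -> smooth v -> u 0 = v 0 -> Derive u 0 = Derive v 0 ->
  forall y, is_derive (glue u v) y (glue (Derive u) (Derive v) y).
Proof.
  intros Su Sv E0 E1 y. destruct (Rlt_le_dec 0 y) as [Hy | Hy].
  - rewrite glue_nonneg by lra. apply (is_derive_ext_loc v).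
    + apply (filter_imp (fun t => 0 < t)); [intros t Ht; now rewrite glue_nonneg by lra |].
      now apply open_gt.
    + now apply Derive_correct, smooth_ex_derive.
  - destruct (Rle_lt_or_eq_dec _ _ Hy) as [Hy' | ->].
    + rewrite glue_neg by lra. apply (is_derive_ext_loc u).
      * apply (filter_imp (fun t => t < 0)); [intros t Ht; now rewrite glue_neg |].
        now apply open_lt.
      * now apply Derive_correct, smooth_ex_derive.
    + rewrite glue_nonneg by lra. apply is_derive_glue0; auto.
      * rewrite <- E1. now apply Derive_correct, smooth_ex_derive.
      * now apply Derive_correct, smooth_ex_derive.
Qed.

Lemma Derive_n_glue u v : smooth u -> smooth v ->
  (forall n, Derive_n u n 0 = Derive_n v n 0) ->
  forall n x, Derive_n (glue u v) n x = glue (Derive_n u n) (Derive_n v n) x.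
Proof.
  intros Su Sv E. induction n as [|n IH]; intros x; [reflexivity |].
  simpl. rewrite (Derive_ext _ _ _ IH). apply is_derive_unique, is_derive_glue;
    try apply smooth_Derive_n; auto. apply (E (S n)).
Qed.

Lemma smooth_glue u v : smooth u -> smooth v ->
  (forall n, Derive_n u n 0 = Derive_n v n 0) -> smooth (glue u v).
Proof.
  intros Su Sv E [|n] x; [exact I |]. simpl.
  apply (ex_derive_ext (glue (Derive_n u n) (Derive_n v n))).
  - intros t. symmetry. now apply Derive_n_glue.
  - eexists. apply is_derive_glue; try apply smooth_Derive_n; auto. apply (E (S n)).
Qed.

Lemma sum_f_R0_single (u : nat -> R) n j : (j <= n)%nat ->
  (forall i, (i <= n)%nat -> i <> j -> u i = 0) -> sum_f_R0 u n = u j.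
Proof.
  induction n as [|n IH]; intros Hj H.
  - simpl. now replace j with 0%nat by lia.
  - simpl. destruct (Nat.eq_dec j (S n)) as [-> | Hne].
    + rewrite (sum_eq _ (fun _ => 0)), sum_cte; [ring |].
      intros i Hi. apply H; lia.
    + rewrite IH, (H (S n)); try lia; [ring |]. intros; apply H; lia.
Qed.

Lemma sum_f_R0_zero (u : nat -> R) n : (forall i, (i <= n)%nat -> u i = 0) -> sum_f_R0 u n = 0.
Proof. intros H. rewrite (sum_eq _ (fun _ => 0)), sum_cte; [ring | exact H]. Qed.

Lemma sum_f_R0_swap (a : nat -> nat -> R) M N :
  sum_f_R0 (fun k => sum_f_R0 (fun n => a k n) N) M =
  sum_f_R0 (fun n => sum_f_R0 (fun k => a k n) M) N.
Proof.
  induction M as [|M IH]; [reflexivity |]. simpl. now rewrite IH, <- sum_plus.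
Qed.

(** * Truncated power series and Taylor expansions *)

Definition fps_trunc (c : fps) (N : nat) (x : R) : R := sum_f_R0 (fun k => c k * x ^ k) N.

Lemma fps_trunc_S c N x : fps_trunc c (S N) x = fps_trunc c N x + c (S N) * x ^ S N.
Proof. reflexivity. Qed.

Lemma fps_trunc_shift c N x :
  fps_trunc c (S N) x = c 0%nat + x * fps_trunc (fun k => c (S k)) N x.
Proof.
  induction N as [|N IH]; [unfold fps_trunc; simpl; ring |].
  rewrite fps_trunc_S, IH, (fps_trunc_S (fun k => c (S k))). simpl. ring.
Qed.

Lemma fps_trunc_ext c d N x : (forall k, (k <= N)%nat -> c k = d k) ->
  fps_trunc c N x = fps_trunc d N x.
Proof. intros H. apply sum_eq. intros i Hi. now rewrite H. Qed.

Lemma fps_trunc_minus c d N x :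
  fps_trunc c N x - fps_trunc d N x = fps_trunc (fun k => c k - d k) N x.
Proof. unfold fps_trunc. rewrite <- minus_sum. apply sum_eq. intros; ring. Qed.

Lemma fps_trunc_at0 c N : fps_trunc c N 0 = c 0%nat.
Proof.
  unfold fps_trunc. rewrite (sum_f_R0_single _ N 0); [simpl; ring | lia |].
  intros [|i] _ Hi; [lia | simpl; ring].
Qed.

Lemma fps_trunc_one N x : fps_trunc fps_one N x = 1.
Proof.
  unfold fps_trunc. rewrite (sum_f_R0_single _ N 0); [unfold fps_one; simpl; ring | lia |].
  intros [|i] _ Hi; [lia | unfold fps_one; simpl; ring].
Qed.

Lemma fps_trunc_X N x : (1 <= N)%nat -> fps_trunc fps_X N x = x.
Proof.
  intros HN. unfold fps_trunc. rewrite (sum_f_R0_single _ N 1); [unfold fps_X; simpl; ring | lia |].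
  intros i _ Hi. unfold fps_X. destruct (Nat.eqb_spec i 1); [lia | ring].
Qed.

Lemma fps_trunc_bounded c N : exists M, forall x, Rabs x <= 1 -> Rabs (fps_trunc c N x) <= M.
Proof.
  exists (sum_f_R0 (fun k => Rabs (c k)) N). intros x Hx.
  eapply Rle_trans; [apply sum_f_R0_triangle |]. apply sum_Rle. intros k _.
  rewrite Rabs_mult, <- RPow_abs. rewrite <- (Rmult_1_r (Rabs (c k))) at 2.
  apply Rmult_le_compat_l; [apply Rabs_pos |].
  rewrite <- (pow1 k). apply pow_incr. split; [apply Rabs_pos | exact Hx].
Qed.

Lemma pow_sub_lipschitz k y z M : 1 <= M -> Rabs y <= M -> Rabs z <= M ->
  Rabs (y ^ k - z ^ k) <= INR k * M ^ k * Rabs (y - z).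
Proof.
  intros HM Hy Hz. induction k as [|k IH].
  - simpl. replace (1 - 1) with 0 by ring. rewrite Rabs_R0. lra.
  - simpl pow. replace (y * y ^ k - z * z ^ k) with (y * (y ^ k - z ^ k) + z ^ k * (y - z)) by ring.
    eapply Rle_trans; [apply Rabs_triang |]. rewrite !Rabs_mult.
    assert (HMk : M ^ k <= M * M ^ k).
    { rewrite <- (Rmult_1_l (M ^ k)) at 1. apply Rmult_le_compat_r; [apply pow_le |]; lra. }
    assert (Hzk : Rabs (z ^ k) <= M ^ k).
    { rewrite <- RPow_abs. apply pow_incr. split; [apply Rabs_pos | exact Hz]. }
    assert (Rabs y * Rabs (y ^ k - z ^ k) <= M * (INR k * M ^ k * Rabs (y - z)))
      by (apply Rmult_le_compat; auto using Rabs_pos).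
    assert (Rabs (z ^ k) * Rabs (y - z) <= M * M ^ k * Rabs (y - z))
      by (apply Rmult_le_compat_r; [apply Rabs_pos | lra]).
    pose proof (Rabs_pos (y - z)). pose proof (pos_INR k). rewrite S_INR. nra.
Qed.

Lemma fps_trunc_lipschitz c N M : 1 <= M -> exists L, 0 <= L /\
  forall y z, Rabs y <= M -> Rabs z <= M ->
  Rabs (fps_trunc c N y - fps_trunc c N z) <= L * Rabs (y - z).
Proof.
  intros HM. exists (sum_f_R0 (fun k => Rabs (c k) * (INR k * M ^ k)) N). split.
  - apply cond_pos_sum. intros k.
    apply Rmult_le_pos; [apply Rabs_pos | apply Rmult_le_pos; [apply pos_INR | apply pow_le; lra]].
  - intros y z Hy Hz. unfold fps_trunc. rewrite <- minus_sum.
    eapply Rle_trans; [apply sum_f_R0_triangle |].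
    rewrite Rmult_comm, scal_sum. apply sum_Rle. intros k _.
    rewrite <- Rmult_minus_distr_l, Rabs_mult, Rmult_assoc.
    apply Rmult_le_compat_l; [apply Rabs_pos | now apply pow_sub_lipschitz].
Qed.

Lemma fps_pow_coef_lt b : b 0%nat = 0 -> forall k n, (n < k)%nat -> fps_pow b k n = 0.
Proof.
  intros Hb. induction k as [|k IH]; intros n Hn; [lia |].
  simpl. unfold fps_mul. apply sum_f_R0_zero. intros [|i] Hi.
  - rewrite Hb. ring.
  - rewrite IH by lia. ring.
Qed.

Lemma fps_pow_X k n : fps_pow fps_X k n = if Nat.eqb k n then 1 else 0.
Proof.
  revert n. induction k as [|k IH]; intros n.
  - simpl. unfold fps_one. now destruct n.
  - simpl fps_pow. unfold fps_mul. destruct n as [|n].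
    + simpl. unfold fps_X. simpl. ring.
    + rewrite (sum_f_R0_single _ (S n) 1); [| lia |].
      * unfold fps_X. simpl Nat.eqb at 1. rewrite IH. replace (S n - 1)%nat with n by lia.
        simpl. ring.
      * intros i _ Hi. unfold fps_X. destruct (Nat.eqb_spec i 1); [lia | ring].
Qed.

Lemma fps_comp_X_r a : fps_comp a fps_X = a.
Proof.
  apply functional_extensionality. intros n. unfold fps_comp.
  rewrite (sum_f_R0_single _ n n); [| lia |].
  - rewrite fps_pow_X, Nat.eqb_refl. ring.
  - intros i _ Hi. rewrite fps_pow_X. destruct (Nat.eqb_spec i n); [lia | ring].
Qed.

Lemma fps_comp_X_l b : b 0%nat = 0 -> fps_comp fps_X b = b.
Proof.
  intros Hb. apply functional_extensionality. intros [|n]; unfold fps_comp.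
  - simpl. unfold fps_X. simpl. rewrite Hb. ring.
  - rewrite (sum_f_R0_single _ (S n) 1); [| lia |].
    + unfold fps_X. simpl Nat.eqb. simpl fps_pow. unfold fps_mul.
      rewrite (sum_f_R0_single _ (S n) (S n)); [| lia |].
      * rewrite Nat.sub_diag. unfold fps_one. simpl. ring.
      * intros i Hi0 Hi. unfold fps_one. destruct (Nat.eqb_spec (S n - i) 0); [lia | ring].
    + intros i _ Hi. unfold fps_X. destruct (Nat.eqb_spec i 1); [lia | ring].
Qed.

Lemma fps_trunc_comp A B N x : B 0%nat = 0 ->
  fps_trunc (fps_comp A B) N x = sum_f_R0 (fun k => A k * fps_trunc (fps_pow B k) N x) N.
Proof.
  intros HB. unfold fps_trunc.
  transitivity (sum_f_R0 (fun k => sum_f_R0 (fun n => A k * fps_pow B k n * x ^ n) N) N).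
  2: { apply sum_eq. intros i _. rewrite scal_sum. apply sum_eq. intros; ring. }
  rewrite sum_f_R0_swap. apply sum_eq. intros n Hn. unfold fps_comp.
  rewrite <- (Rmult_comm (x ^ n)), scal_sum.
  destruct (Nat.eq_dec n N) as [-> | Hne]; [apply sum_eq; intros; ring |].
  rewrite (tech2 _ n N) by lia.
  rewrite (sum_f_R0_zero (fun i => A (S n + i)%nat * fps_pow B (S n + i) n * x ^ n)).
  - rewrite Rplus_0_r. apply sum_eq; intros; ring.
  - intros i _. rewrite fps_pow_coef_lt; auto; [ring | lia].
Qed.

Definition is_bigO_pow (N : nat) (e : R -> R) : Prop :=
  exists K rho, 0 < rho /\ forall x, Rabs x < rho -> Rabs (e x) <= K * Rabs x ^ S N.

Definition bounded_near0 (m : R -> R) : Prop :=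
  exists M rho, 0 < rho /\ forall x, Rabs x < rho -> Rabs (m x) <= M.

Lemma is_bigO_pow_of_unit_ball N e :
  (exists K, forall x, Rabs x <= 1 -> Rabs (e x) <= K * Rabs x ^ S N) -> is_bigO_pow N e.
Proof. intros [K HK]. exists K, 1. split; [lra |]. intros x Hx. apply HK. lra. Qed.

Lemma is_bigO_pow_ext N e1 e2 : (forall x, e1 x = e2 x) -> is_bigO_pow N e1 -> is_bigO_pow N e2.
Proof.
  intros E [K [rho [Hrho H]]]. exists K, rho. split; [exact Hrho |].
  intros x Hx. rewrite <- E. now apply H.
Qed.

Lemma is_bigO_pow_opp N e : is_bigO_pow N e -> is_bigO_pow N (fun x => - e x).
Proof.
  intros [K [rho [Hrho H]]]. exists K, rho. split; [exact Hrho |].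
  intros x Hx. rewrite Rabs_Ropp. now apply H.
Qed.

Lemma is_bigO_pow_plus N e1 e2 :
  is_bigO_pow N e1 -> is_bigO_pow N e2 -> is_bigO_pow N (fun x => e1 x + e2 x).
Proof.
  intros [K1 [r1 [Hr1 H1]]] [K2 [r2 [Hr2 H2]]]. exists (K1 + K2), (Rmin r1 r2).
  split; [now apply Rmin_pos |]. intros x Hx.
  specialize (H1 x (Rlt_le_trans _ _ _ Hx (Rmin_l _ _))).
  specialize (H2 x (Rlt_le_trans _ _ _ Hx (Rmin_r _ _))).
  eapply Rle_trans; [apply Rabs_triang | lra].
Qed.

Lemma is_bigO_pow_mult_bounded N m e :
  bounded_near0 m -> is_bigO_pow N e -> is_bigO_pow N (fun x => m x * e x).
Proof.
  intros [M [r1 [Hr1 H1]]] [K [r2 [Hr2 H2]]]. exists (M * K), (Rmin r1 r2).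
  split; [now apply Rmin_pos |]. intros x Hx.
  specialize (H1 x (Rlt_le_trans _ _ _ Hx (Rmin_l _ _))).
  specialize (H2 x (Rlt_le_trans _ _ _ Hx (Rmin_r _ _))).
  rewrite Rabs_mult, Rmult_assoc. apply Rmult_le_compat; auto using Rabs_pos.
Qed.

Lemma is_bigO_pow_sum N (F : nat -> R -> R) n :
  (forall k, (k <= n)%nat -> is_bigO_pow N (F k)) ->
  is_bigO_pow N (fun x => sum_f_R0 (fun k => F k x) n).
Proof.
  induction n as [|n IH]; intros H; [exact (H 0%nat (le_n _)) |].
  apply is_bigO_pow_plus; [apply IH; intros; apply H; lia | apply H; lia].
Qed.

Lemma is_bigO_pow_pred N e : is_bigO_pow (S N) e -> is_bigO_pow N e.
Proof.
  intros [K [rho [Hrho H]]]. exists (Rabs K), (Rmin rho 1).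
  split; [apply Rmin_pos; lra |]. intros x Hx.
  assert (Hx1 : Rabs x <= 1) by (pose proof (Rmin_r rho 1); lra).
  eapply Rle_trans; [apply H; pose proof (Rmin_l rho 1); lra |].
  pose proof (pow_le (Rabs x) (S N) (Rabs_pos x)).
  change (Rabs x ^ S (S N)) with (Rabs x * Rabs x ^ S N).
  apply Rle_trans with (Rabs K * (Rabs x * Rabs x ^ S N)).
  - apply Rmult_le_compat_r; [apply Rmult_le_pos; auto using Rabs_pos | apply Rle_abs].
  - apply Rmult_le_compat_l; [apply Rabs_pos |]. pose proof (Rabs_pos x). nra.
Qed.

Lemma is_bigO_pow_pos N e : is_bigO_pow N e ->
  exists K rho, 0 < rho /\ forall y, 0 < y < rho -> Rabs (e y) <= K * y ^ S N.
Proof.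
  intros [K [rho [Hrho H]]]. exists K, rho. split; [exact Hrho |].
  intros y Hy. rewrite <- (Rabs_right y) at 2 by lra. apply H. rewrite Rabs_right; lra.
Qed.

Lemma is_bigO_pow_comp N e b :
  is_bigO_pow N e -> is_bigO_pow 0 b -> is_bigO_pow N (fun x => e (b x)).
Proof.
  intros [K [r1 [Hr1 H1]]] [L [r2 [Hr2 H2]]].
  pose proof (Rabs_pos L) as HL.
  exists (Rabs K * Rabs L ^ S N), (Rmin r2 (r1 / (Rabs L + 1))).
  split; [apply Rmin_pos; [lra | apply Rdiv_lt_0_compat; lra] |]. intros x Hx.
  assert (Hbx : Rabs (b x) <= Rabs L * Rabs x).
  { eapply Rle_trans; [apply H2; pose proof (Rmin_l r2 (r1 / (Rabs L + 1))); lra |].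
    simpl. rewrite Rmult_1_r. apply Rmult_le_compat_r; [apply Rabs_pos | apply Rle_abs]. }
  assert (Hbr : Rabs (b x) < r1).
  { assert (Rabs x * (Rabs L + 1) < r1).
    { pose proof (Rmin_r r2 (r1 / (Rabs L + 1))).
      apply Rmult_lt_reg_r with (/ (Rabs L + 1)); [apply Rinv_0_lt_compat; lra |].
      rewrite Rmult_assoc, Rinv_r, Rmult_1_r by lra. unfold Rdiv in *. lra. }
    pose proof (Rabs_pos x). nra. }
  eapply Rle_trans; [apply H1, Hbr |].
  rewrite Rmult_assoc, <- Rpow_mult_distr.
  apply Rle_trans with (Rabs K * Rabs (b x) ^ S N).
  - apply Rmult_le_compat_r; [apply pow_le, Rabs_pos | apply Rle_abs].
  - apply Rmult_le_compat_l; [apply Rabs_pos |]. apply pow_incr. split; [apply Rabs_pos | exact Hbx].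
Qed.

Lemma bounded_near0_fps_trunc c N : bounded_near0 (fps_trunc c N).
Proof.
  destruct (fps_trunc_bounded c N) as [M HM]. exists M, 1. split; [lra |].
  intros x Hx. apply HM. lra.
Qed.

Lemma pow_abs_le_pow_abs x n m : Rabs x <= 1 -> (n <= m)%nat -> Rabs x ^ m <= Rabs x ^ n.
Proof.
  intros Hx Hnm. induction Hnm as [|m Hnm IH]; [lra |]. simpl.
  apply Rle_trans with (2 := IH). rewrite <- (Rmult_1_l (Rabs x ^ m)) at 2.
  apply Rmult_le_compat_r; [apply pow_le, Rabs_pos | exact Hx].
Qed.

Lemma fps_trunc_mul_bigO u v N :
  is_bigO_pow N (fun x => fps_trunc u N x * fps_trunc v N x - fps_trunc (fps_mul u v) N x).
Proof.
  apply is_bigO_pow_of_unit_ball. destruct N as [|N].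
  - exists 0. intros x _. unfold fps_trunc, fps_mul. simpl.
    match goal with |- Rabs ?a <= _ => replace a with 0 by ring end.
    rewrite Rabs_R0. lra.
  - exists (sum_f_R0 (fun k => sum_f_R0 (fun l => Rabs (u (S (l + k))) * Rabs (v (S N - l)%nat))
                                       (Init.Nat.pred (S N - k))) (Init.Nat.pred (S N))).
    intros x Hx. unfold fps_trunc. rewrite cauchy_finite by lia.
    match goal with |- Rabs (?A + ?B - ?C) <= _ => replace (A + B - C) with B end.
    2: { unfold fps_mul. match goal with |- _ = ?A + _ - ?C => replace A with C; [ring |] end.
         apply sum_eq. intros i Hi. rewrite Rmult_comm, scal_sum. apply sum_eq. intros j Hj.
         replace (x ^ i) with (x ^ j * x ^ (i - j)) by (rewrite <- pow_add; f_equal; lia). ring. }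
    eapply Rle_trans; [apply sum_f_R0_triangle |].
    rewrite Rmult_comm, scal_sum. apply sum_Rle. intros k Hk.
    eapply Rle_trans; [apply sum_f_R0_triangle |].
    rewrite Rmult_comm, scal_sum. apply sum_Rle. intros l Hl.
    replace (u (S (l + k)) * x ^ S (l + k) * (v (S N - l)%nat * x ^ (S N - l)))
      with (u (S (l + k)) * v (S N - l)%nat * x ^ (S (l + k) + (S N - l))) by (rewrite pow_add; ring).
    rewrite !Rabs_mult, <- RPow_abs. apply Rmult_le_compat_l.
    + apply Rmult_le_pos; apply Rabs_pos.
    + apply pow_abs_le_pow_abs; [exact Hx | lia].
Qed.

Lemma fps_trunc_pow_bigO u N k :
  is_bigO_pow N (fun x => fps_trunc u N x ^ k - fps_trunc (fps_pow u k) N x).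
Proof.
  induction k as [|k IH].
  - apply is_bigO_pow_of_unit_ball. exists 0. intros x _. simpl. rewrite fps_trunc_one.
    replace (1 - 1) with 0 by ring. rewrite Rabs_R0. lra.
  - apply (is_bigO_pow_ext N (fun x =>
      fps_trunc u N x * (fps_trunc u N x ^ k - fps_trunc (fps_pow u k) N x) +
      (fps_trunc u N x * fps_trunc (fps_pow u k) N x - fps_trunc (fps_mul u (fps_pow u k)) N x))).
    + intros x. simpl. ring.
    + apply is_bigO_pow_plus; [| apply fps_trunc_mul_bigO].
      apply is_bigO_pow_mult_bounded; [apply bounded_near0_fps_trunc | exact IH].
Qed.

Lemma fps_trunc_comp_bigO A B N : B 0%nat = 0 ->
  is_bigO_pow N (fun x => fps_trunc A N (fps_trunc B N x) - fps_trunc (fps_comp A B) N x).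
Proof.
  intros HB.
  apply (is_bigO_pow_ext N (fun x : R => sum_f_R0 (fun k =>
           A k * (fps_trunc B N x ^ k - fps_trunc (fps_pow B k) N x)) N)).
  - intros x. rewrite fps_trunc_comp by exact HB.
    change (fps_trunc A N (fps_trunc B N x))
      with (sum_f_R0 (fun k => A k * fps_trunc B N x ^ k) N).
    rewrite <- minus_sum. apply sum_eq. intros; ring.
  - apply is_bigO_pow_sum. intros k _.
    apply (is_bigO_pow_mult_bounded N (fun _ => A k)); [| apply fps_trunc_pow_bigO].
    exists (Rabs (A k)), 1. split; [lra | intros; lra].
Qed.

Lemma taylor0_ext u v : (forall x, u x = v x) -> taylor0 u = taylor0 v.
Proof.
  intros E. apply functional_extensionality. intros n. unfold taylor0.
  now rewrite (Derive_n_ext u v).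
Qed.

Lemma taylor0_coef0 u : taylor0 u 0%nat = u 0.
Proof. unfold taylor0. simpl. field. Qed.

Lemma taylor0_coef1 u : taylor0 u 1%nat = Derive u 0.
Proof. unfold taylor0. simpl. now rewrite Rdiv_1_r. Qed.

Lemma taylor0_id : taylor0 (fun x => x) = fps_X.
Proof.
  apply functional_extensionality. intros [|[|n]]; unfold taylor0, fps_X.
  - simpl. field.
  - simpl. rewrite Derive_id. field.
  - rewrite Derive_n_S_Derive, (Derive_n_ext (Derive (fun x => x)) (fun _ => 1)).
    + rewrite Derive_n_const. simpl. unfold Rdiv; ring.
    + intros; apply Derive_id.
Qed.

Lemma taylor0_scal_arg u c k : smooth u ->
  taylor0 (fun t => u (c * t)) k = c ^ k * taylor0 u k.
Proof.
  intros Su. unfold taylor0. rewrite Derive_n_comp_scal, Rmult_0_r.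
  - unfold Rdiv; ring.
  - apply filter_forall. intros; apply Su.
Qed.

Lemma Derive_n_eq_of_taylor0_eq u v : taylor0 u = taylor0 v ->
  forall n, Derive_n u n 0 = Derive_n v n 0.
Proof.
  intros E n. pose proof (f_equal (fun c => c n) E) as H. unfold taylor0 in H.
  apply Rmult_eq_reg_r with (/ INR (Factorial.fact n)); [exact H |].
  apply Rinv_neq_0_compat, INR_fact_neq_0.
Qed.

Lemma taylor_remainder_pos u N : smooth u -> exists K, forall y, 0 < y <= 1 ->
  Rabs (u y - fps_trunc (taylor0 u) N y) <= K * y ^ S N.
Proof.
  intros Su. set (D := Derive_n u (S N)).
  destruct (continuity_ab_maj (fun t => Rabs (D t)) 0 1) as [Mx [HM _]]; [lra | |].
  { intros c _. apply (continuity_pt_comp D Rabs).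
    - apply smooth_continuity_pt, smooth_Derive_n, Su.
    - apply Rcontinuity_abs. }
  exists (Rabs (D Mx) / INR (Factorial.fact (S N))). intros y Hy.
  destruct (Taylor_Lagrange u N 0 y ltac:(lra)) as [z [Hz E]]; [intros t _ k _; apply Su |].
  rewrite E. unfold fps_trunc, taylor0. rewrite Rminus_0_r. fold D.
  match goal with |- Rabs (?A + ?B - ?C) <= _ => replace (A + B - C) with B end.
  2: { match goal with |- _ = ?A + _ - ?C => replace A with C; [ring |] end.
       apply sum_eq. intros i _. field. apply INR_fact_neq_0. }
  assert (Hf : 0 < INR (Factorial.fact (S N))) by apply INR_fact_lt_0.
  rewrite Rabs_mult, (Rabs_right (y ^ S N / _)).
  2: { apply Rle_ge, Rdiv_le_0_compat; [apply pow_le; lra | exact Hf]. }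
  unfold Rdiv. rewrite (Rmult_comm (y ^ S N)), Rmult_comm, <- Rmult_assoc.
  apply Rmult_le_compat_r; [apply pow_le; lra |].
  apply Rmult_le_compat_r; [apply Rlt_le, Rinv_0_lt_compat, Hf | apply HM; lra].
Qed.

Lemma taylor_remainder_bigO u N : smooth u ->
  is_bigO_pow N (fun y => u y - fps_trunc (taylor0 u) N y).
Proof.
  intros Su. destruct (taylor_remainder_pos u N Su) as [K1 H1].
  destruct (taylor_remainder_pos _ N (smooth_scal_arg u (-1) Su)) as [K2 H2].
  apply is_bigO_pow_of_unit_ball. exists (Rmax K1 K2). intros y Hy.
  destruct (Rtotal_order y 0) as [Hn | [-> | Hp]].
  - specialize (H2 (- y) ltac:(split; [lra | rewrite Rabs_left in Hy; lra])).
    replace (u (-1 * - y)) with (u y) in H2 by (f_equal; ring).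
    replace (fps_trunc (taylor0 (fun t => u (-1 * t))) N (- y)) with (fps_trunc (taylor0 u) N y) in H2.
    + rewrite (Rabs_left y) by lra. eapply Rle_trans; [exact H2 |].
      apply Rmult_le_compat_r; [apply pow_le; lra | apply Rmax_r].
    + apply sum_eq. intros i _. rewrite taylor0_scal_arg by exact Su.
      replace (- y) with (-1 * y) by ring. rewrite Rpow_mult_distr.
      replace ((-1) ^ i * taylor0 u i * ((-1) ^ i * y ^ i))
        with (((-1) * (-1)) ^ i * (taylor0 u i * y ^ i)) by (rewrite Rpow_mult_distr; ring).
      replace (-1 * -1) with 1 by ring. rewrite pow1. ring.
  - rewrite fps_trunc_at0, taylor0_coef0, Rminus_diag, Rabs_R0, pow_i by lia. lra.
  - rewrite (Rabs_right y) by lra. eapply Rle_trans; [apply H1; rewrite Rabs_right in Hy; lra |].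
    apply Rmult_le_compat_r; [apply pow_le; lra | apply Rmax_l].
Qed.

Lemma eq0_of_le_linear a L rho : 0 < rho ->
  (forall x, 0 < x < rho -> Rabs a <= L * x) -> a = 0.
Proof.
  intros Hr H. destruct (Req_dec a 0) as [| Ha]; [assumption | exfalso].
  assert (Hpa : 0 < Rabs a) by now apply Rabs_pos_lt.
  set (L' := Rabs L + 1).
  assert (HL' : 0 < L') by (unfold L'; pose proof (Rabs_pos L); lra).
  set (x := Rmin (rho / 2) (Rabs a / (2 * L'))).
  assert (Hx1 : 0 < x) by (apply Rmin_pos; [lra | apply Rdiv_lt_0_compat; lra]).
  pose proof (Rmin_l (rho / 2) (Rabs a / (2 * L'))) as Hx2.
  pose proof (Rmin_r (rho / 2) (Rabs a / (2 * L'))) as Hx3. fold x in Hx2, Hx3.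
  specialize (H x ltac:(lra)).
  assert (L * x <= L' * x)
    by (apply Rmult_le_compat_r; [lra | unfold L'; pose proof (Rle_abs L); lra]).
  assert (L' * x <= Rabs a / 2).
  { apply Rle_trans with (L' * (Rabs a / (2 * L'))); [apply Rmult_le_compat_l; lra |].
    right. field. lra. }
  lra.
Qed.

Lemma fps_coef_eq0_of_small N : forall c K rho, 0 < rho ->
  (forall x, 0 < x < rho -> Rabs (fps_trunc c N x) <= K * x ^ S N) ->
  forall k, (k <= N)%nat -> c k = 0.
Proof.
  induction N as [|N IH]; intros c K rho Hr H k Hk.
  - replace k with 0%nat by lia. apply (eq0_of_le_linear _ K (Rmin rho 1)); [apply Rmin_pos; lra |].
    intros x Hx. pose proof (Rmin_l rho 1).
    specialize (H x ltac:(lra)). unfold fps_trunc in H. simpl in H.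
    now rewrite !Rmult_1_r in H.
  - destruct (fps_trunc_bounded (fun k => c (S k)) N) as [M HM].
    assert (H0 : c 0%nat = 0).
    { apply (eq0_of_le_linear _ (Rabs K + M) (Rmin rho 1)); [apply Rmin_pos; lra |].
      intros x Hx. pose proof (Rmin_l rho 1). pose proof (Rmin_r rho 1).
      specialize (H x ltac:(lra)). rewrite fps_trunc_shift in H.
      specialize (HM x ltac:(rewrite Rabs_right; lra)).
      set (r := fps_trunc (fun k => c (S k)) N x) in *.
      replace (c 0%nat) with ((c 0%nat + x * r) - x * r) by ring.
      eapply Rle_trans; [apply Rabs_triang |].
      rewrite Rabs_Ropp, Rabs_mult, (Rabs_right x) by lra.
      assert (K * x ^ S (S N) <= Rabs K * x).
      { apply Rle_trans with (Rabs K * x ^ S (S N)).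
        - apply Rmult_le_compat_r; [apply pow_le; lra | apply Rle_abs].
        - apply Rmult_le_compat_l; [apply Rabs_pos |]. change (x ^ S (S N)) with (x * x ^ S N).
          assert (x ^ S N <= 1) by (rewrite <- (pow1 (S N)); apply pow_incr; lra). nra. }
      assert (x * Rabs r <= M * x) by (rewrite Rmult_comm; apply Rmult_le_compat_r; lra).
      lra. }
    destruct k as [|k]; [exact H0 |].
    apply (IH (fun k => c (S k)) K rho Hr); [| lia].
    intros x Hx. specialize (H x Hx).
    rewrite fps_trunc_shift, H0, Rplus_0_l, Rabs_mult, (Rabs_right x) in H by lra.
    apply Rmult_le_reg_l with x; [lra |]. simpl in H |- *. lra.
Qed.

Lemma fps_trunc_bigO_coef_eq0 N c : is_bigO_pow N (fps_trunc c N) ->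
  forall k, (k <= N)%nat -> c k = 0.
Proof.
  intros HO. destruct (is_bigO_pow_pos N _ HO) as [K [rho [Hrho H]]].
  exact (fps_coef_eq0_of_small N c K rho Hrho H).
Qed.

Lemma bounded_near0_of_bigO e : is_bigO_pow 0 e -> bounded_near0 e.
Proof.
  intros [K [rho [Hrho H]]]. exists (Rabs K), (Rmin rho 1). split; [apply Rmin_pos; lra |].
  intros x Hx. pose proof (Rmin_l rho 1). pose proof (Rmin_r rho 1).
  eapply Rle_trans; [apply H; lra |]. simpl. rewrite Rmult_1_r.
  apply Rle_trans with (Rabs K * Rabs x).
  - apply Rmult_le_compat_r; [apply Rabs_pos | apply Rle_abs].
  - pose proof (Rabs_pos K). pose proof (Rabs_pos x). nra.
Qed.

Lemma fps_trunc_comp_diff_bigO A N b beta :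
  bounded_near0 b -> bounded_near0 beta -> is_bigO_pow N (fun x => b x - beta x) ->
  is_bigO_pow N (fun x => fps_trunc A N (b x) - fps_trunc A N (beta x)).
Proof.
  intros [M1 [r1 [Hr1 H1]]] [M2 [r2 [Hr2 H2]]] [K [r3 [Hr3 H3]]].
  set (M := 1 + Rabs M1 + Rabs M2).
  assert (HM : 1 <= M) by (unfold M; pose proof (Rabs_pos M1); pose proof (Rabs_pos M2); lra).
  destruct (fps_trunc_lipschitz A N M HM) as [L [HL0 HL]].
  exists (L * K), (Rmin r1 (Rmin r2 r3)).
  split; [repeat apply Rmin_pos; assumption |]. intros x Hx.
  pose proof (Rmin_l r1 (Rmin r2 r3)). pose proof (Rmin_r r1 (Rmin r2 r3)).
  pose proof (Rmin_l r2 r3). pose proof (Rmin_r r2 r3).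
  specialize (H1 x ltac:(lra)). specialize (H2 x ltac:(lra)). specialize (H3 x ltac:(lra)).
  eapply Rle_trans.
  - apply HL; unfold M; pose proof (Rle_abs M1); pose proof (Rle_abs M2);
      pose proof (Rabs_pos M1); pose proof (Rabs_pos M2); lra.
  - rewrite Rmult_assoc. now apply Rmult_le_compat_l.
Qed.

Theorem taylor0_comp a b : smooth a -> smooth b -> b 0 = 0 ->
  taylor0 (fun x => a (b x)) = fps_comp (taylor0 a) (taylor0 b).
Proof.
  intros Sa Sb Hb0. apply functional_extensionality. intros N.
  set (A := taylor0 a). set (B := taylor0 b).
  assert (HB0 : B 0%nat = 0) by (unfold B; now rewrite taylor0_coef0).
  assert (Ob : is_bigO_pow 0 b).
  { apply (is_bigO_pow_ext 0 (fun y => b y - fps_trunc B 0 y)); [| now apply taylor_remainder_bigO].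
    intros y. unfold fps_trunc. simpl. rewrite HB0. ring. }
  assert (Rb : is_bigO_pow N (fun x => b x - fps_trunc B N x)) by now apply taylor_remainder_bigO.
  assert (Diff : is_bigO_pow N (fps_trunc (fun k => taylor0 (fun x => a (b x)) k - fps_comp A B k) N)).
  { apply (is_bigO_pow_ext N (fun x =>
       - (a (b x) - fps_trunc (taylor0 (fun x => a (b x))) N x)
       + (a (b x) - fps_trunc A N (b x))
       + (fps_trunc A N (b x) - fps_trunc A N (fps_trunc B N x))
       + (fps_trunc A N (fps_trunc B N x) - fps_trunc (fps_comp A B) N x))).
    { intros x. rewrite <- fps_trunc_minus. ring. }
    apply is_bigO_pow_plus; [apply is_bigO_pow_plus; [apply is_bigO_pow_plus |] |].
    - apply is_bigO_pow_opp, taylor_remainder_bigO, smooth_comp; assumption.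
    - apply (is_bigO_pow_comp N (fun y => a y - fps_trunc A N y)); [now apply taylor_remainder_bigO | exact Ob].
    - apply fps_trunc_comp_diff_bigO; [now apply bounded_near0_of_bigO | apply bounded_near0_fps_trunc | exact Rb].
    - now apply fps_trunc_comp_bigO. }
  apply Rminus_diag_uniq. exact (fps_trunc_bigO_coef_eq0 N _ Diff N (le_n N)).
Qed.

(** * Diffeomorphisms commuting with a flat perturbation of the identity *)

Lemma bernoulli_ineq s M : 0 <= s -> 1 + INR M * s <= (1 + s) ^ M.
Proof.
  intros Hs. induction M as [|M IH]; [simpl; lra |].
  rewrite S_INR. simpl pow. pose proof (pos_INR M). nra.
Qed.

Lemma exists_nat_mul_ge A e : 0 < e -> exists n : nat, A <= INR n * e.
Proof. intros He. destruct (INR_archimed e A He) as [n Hn]. exists n. lra. Qed.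

Lemma one_plus_mul_pow_one_sub_le a B t T (M : nat) :
  0 < a -> 0 <= B -> 0 <= t <= T -> a * T < 1 -> B * T < 1 ->
  1 + B <= INR M * a * (1 - B * T) -> (1 + t) * (1 - a * t) ^ M <= 1 - B * t.
Proof.
  intros Ha HB Ht HaT HBT HM.
  assert (Hat : 0 <= a * t <= a * T) by (split; nra).
  set (X := (1 - a * t) ^ M). set (Y := (1 + a * t) ^ M).
  assert (HX : 0 <= X) by (apply pow_le; nra).
  assert (HXY : X * Y <= 1).
  { unfold X, Y. rewrite <- Rpow_mult_distr. apply Rle_trans with (1 ^ M); [| rewrite pow1; lra].
    apply pow_incr. split; nra. }
  assert (HY : 1 + INR M * (a * t) <= Y) by (apply bernoulli_ineq; nra).
  assert (1 + B <= INR M * a * (1 - B * t)).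
  { apply Rle_trans with (1 := HM). pose proof (pos_INR M). apply Rmult_le_compat_l; nra. }
  assert (1 + t <= (1 - B * t) * (1 + INR M * (a * t))) by (pose proof (pos_INR M); nra).
  assert ((1 - B * t) * (1 + INR M * (a * t)) <= (1 - B * t) * Y)
    by (apply Rmult_le_compat_l; [nra | exact HY]).
  assert ((1 + t) * X <= (1 - B * t) * Y * X) by (apply Rmult_le_compat_r; lra).
  assert ((1 - B * t) * Y * X <= 1 - B * t).
  { rewrite Rmult_assoc. rewrite <- (Rmult_1_r (1 - B * t)) at 2.
    apply Rmult_le_compat_l; nra. }
  lra.
Qed.

Lemma one_le_one_sub_mul_pow_one_plus B t T (L : nat) :
  0 <= B -> 0 <= t <= T -> B * T < 1 -> B <= INR L * (1 - B * T) ->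
  1 <= (1 - B * t) * (1 + t) ^ L.
Proof.
  intros HB Ht HBT HL.
  assert (HY : 1 + INR L * t <= (1 + t) ^ L) by (apply bernoulli_ineq; lra).
  pose proof (pos_INR L).
  assert (B <= INR L * (1 - B * t)) by (apply Rle_trans with (1 := HL); apply Rmult_le_compat_l; nra).
  assert (1 <= (1 - B * t) * (1 + INR L * t)) by nra.
  assert ((1 - B * t) * (1 + INR L * t) <= (1 - B * t) * (1 + t) ^ L)
    by (apply Rmult_le_compat_l; nra).
  lra.
Qed.

Fixpoint partial_prod (s : nat -> R) (n : nat) : R :=
  match n with O => 1 | S n => partial_prod s n * s n end.

Lemma partial_prod_pos s n : (forall j, 0 < s j) -> 0 < partial_prod s n.
Proof.
  intros Hs. induction n as [|n IH]; simpl; [lra |]. now apply Rmult_lt_0_compat.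
Qed.

Lemma partial_prod_ge1 s n : (forall j, 1 <= s j) -> 1 <= partial_prod s n.
Proof.
  intros Hs. induction n as [|n IH]; simpl; [lra |]. specialize (Hs n). nra.
Qed.

(* [w] is the gap between two orbits of a contraction and [u] is one of the orbits:
   the gap shrinks at most by [1 - B t n] per step, [u] at least by [1 - a t n], and
   [w <= C u ^ M]; with [M] large this bounds the products of [1 + t n]. *)
Lemma partial_prod_bounded_of_gap (u w t : nat -> R) a B T C (M : nat) :
  0 < a -> 0 <= B -> a * T < 1 -> B * T < 1 -> 1 + B <= INR M * a * (1 - B * T) ->
  (forall n, 0 <= t n <= T) -> (forall n, 0 < u n) -> 0 < w 0%nat ->
  (forall n, (1 - B * t n) * w n <= w (S n)) ->
  (forall n, u (S n) <= u n * (1 - a * t n)) ->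
  (forall n, w n <= C * u n ^ M) ->
  exists K, forall n, partial_prod (fun j => 1 + t j) n <= K.
Proof.
  intros Ha HB HaT HBT HM Ht Hu Hw0 Hw Hdec Hgap.
  set (P := partial_prod (fun j => 1 + t j)). set (Q := partial_prod (fun j => 1 - a * t j)).
  assert (HQ : forall n, 0 < Q n).
  { intros n. apply partial_prod_pos. intros j. specialize (Ht j). nra. }
  assert (HP : forall n, 1 <= P n).
  { intros n. apply partial_prod_ge1. intros j. specialize (Ht j). lra. }
  assert (Hlow : forall n, w 0%nat * P n * Q n ^ M <= w n).
  { induction n as [|n IH]; [unfold P, Q; simpl; rewrite pow1; lra |].
    eapply Rle_trans; [| apply Hw].
    pose proof (one_plus_mul_pow_one_sub_le a B (t n) T M Ha HB (Ht n) HaT HBT HM).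
    change (P (S n)) with (P n * (1 + t n)). change (Q (S n)) with (Q n * (1 - a * t n)).
    rewrite Rpow_mult_distr.
    replace (w 0%nat * (P n * (1 + t n)) * (Q n ^ M * (1 - a * t n) ^ M))
      with ((w 0%nat * P n * Q n ^ M) * ((1 + t n) * (1 - a * t n) ^ M)) by ring.
    rewrite (Rmult_comm (1 - B * t n)). specialize (Ht n).
    apply Rmult_le_compat; auto.
    - pose proof (HP n). pose proof (pow_lt _ M (HQ n)). apply Rmult_le_pos; nra.
    - apply Rmult_le_pos; [lra | apply pow_le; nra]. }
  assert (Hup : forall n, u n <= u 0%nat * Q n).
  { induction n as [|n IH]; [unfold Q; simpl; lra |].
    eapply Rle_trans; [apply Hdec |]. change (Q (S n)) with (Q n * (1 - a * t n)).
    specialize (Ht n). rewrite <- Rmult_assoc. apply Rmult_le_compat_r; [nra | exact IH]. }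
  exists (C * u 0%nat ^ M / w 0%nat). intros n.
  apply Rmult_le_reg_r with (w 0%nat * Q n ^ M); [apply Rmult_lt_0_compat; [lra | apply pow_lt, HQ] |].
  replace (C * u 0%nat ^ M / w 0%nat * (w 0%nat * Q n ^ M)) with (C * (u 0%nat * Q n) ^ M)
    by (rewrite Rpow_mult_distr; field; lra).
  assert (HC : 0 < C).
  { pose proof (Hgap 0%nat). pose proof (pow_lt _ M (Hu 0%nat)).
    destruct (Rle_lt_dec C 0); [nra | assumption]. }
  apply Rle_trans with (w n); [rewrite <- Rmult_assoc, (Rmult_comm (P n)); apply Hlow |].
  eapply Rle_trans; [apply Hgap |]. apply Rmult_le_compat_l; [lra |].
  apply pow_incr. split; [apply Rlt_le, Hu | apply Hup].
Qed.

(* An orbit decreasing by at least [a u ^ (p + 1)] per step cannot have [sum u ^ p]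
   finite, because then it would stay bounded away from [0]. *)
Lemma partial_prod_unbounded_of_decay (u : nat -> R) p a B T :
  0 < a -> 0 <= B -> B * T < 1 ->
  (forall n, 0 < u n) -> (forall n, u n ^ p <= T) ->
  (forall n, u (S n) <= u n * (1 - a * u n ^ p)) ->
  (forall n, u n * (1 - B * u n ^ p) <= u (S n)) ->
  ~ exists K, forall n, partial_prod (fun j => 1 + u j ^ p) n <= K.
Proof.
  intros Ha HB HBT Hu HT Hdec Hinc [K HK].
  set (P := partial_prod (fun j => 1 + u j ^ p)).
  assert (Ht : forall n, 0 <= u n ^ p <= T) by (intros n; split; [apply pow_le, Rlt_le, Hu | apply HT]).
  assert (HP : forall n, 1 <= P n) by (intros n; apply partial_prod_ge1; intros j; specialize (Ht j); lra).
  destruct (exists_nat_mul_ge B (1 - B * T) ltac:(lra)) as [L HL].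
  assert (Hlow : forall n, u 0%nat <= u n * P n ^ L).
  { induction n as [|n IH]; [unfold P; simpl; rewrite pow1; lra |].
    pose proof (one_le_one_sub_mul_pow_one_plus B (u n ^ p) T L HB (Ht n) HBT HL).
    change (P (S n)) with (P n * (1 + u n ^ p)). rewrite Rpow_mult_distr.
    apply Rle_trans with (1 := IH).
    assert (0 <= P n ^ L) by (apply pow_le; specialize (HP n); lra).
    assert (0 <= (1 + u n ^ p) ^ L) by (apply pow_le; specialize (Ht n); lra).
    specialize (Hu n).
    apply Rle_trans with (u n * P n ^ L * ((1 - B * u n ^ p) * (1 + u n ^ p) ^ L)).
    - rewrite <- (Rmult_1_r (u n * P n ^ L)) at 1. apply Rmult_le_compat_l; [nra | assumption].
    - replace (u n * P n ^ L * ((1 - B * u n ^ p) * (1 + u n ^ p) ^ L))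
        with ((u n * (1 - B * u n ^ p)) * (P n ^ L * (1 + u n ^ p) ^ L)) by ring.
      apply Rmult_le_compat_r; [nra | apply Hinc]. }
  assert (HK1 : 1 <= K) by (eapply Rle_trans; [apply (HP 0%nat) | apply HK]).
  set (c := u 0%nat / K ^ L).
  assert (Hc : 0 < c) by (apply Rdiv_lt_0_compat; [apply Hu | apply pow_lt; lra]).
  assert (Hbelow : forall n, c <= u n).
  { intros n. unfold c. pose proof (Hlow n). pose proof (Hu n).
    assert (P n ^ L <= K ^ L) by (apply pow_incr; split; [specialize (HP n); lra | apply HK]).
    assert (0 < K ^ L) by (apply pow_lt; lra).
    apply Rmult_le_reg_r with (K ^ L); [assumption |].
    unfold Rdiv. rewrite Rmult_assoc, Rinv_l by lra. nra. }
  assert (Hdrop : forall n, u n <= u 0%nat - INR n * (a * c ^ S p)).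
  { induction n as [|n IH]; [simpl; lra |].
    rewrite S_INR. pose proof (Hdec n). pose proof (Hbelow n).
    assert (c ^ S p <= u n ^ S p) by (apply pow_incr; lra).
    simpl pow in *. nra. }
  assert (Hac : 0 < a * c ^ S p) by (apply Rmult_lt_0_compat; [lra | apply pow_lt; lra]).
  destruct (exists_nat_mul_ge (u 0%nat) (a * c ^ S p) Hac) as [n Hn].
  pose proof (Hdrop n). pose proof (Hu n). lra.
Qed.

Lemma gap_step k p B d : 0 <= B ->
  (forall u v, 0 < u -> u < v -> v <= d -> (1 - B * v ^ p) * (v - u) <= k v - k u) ->
  forall x y, 0 < x -> 0 < y <= 2 * x -> 2 * x <= d ->
  (1 - 2 ^ p * B * x ^ p) * Rabs (y - x) <= Rabs (k y - k x).
Proof.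
  intros HB Hk x y Hx Hy Hxd.
  assert (Hpow : forall z, 0 < z <= 2 * x -> B * z ^ p <= 2 ^ p * B * x ^ p).
  { intros z Hz. replace (2 ^ p * B * x ^ p) with (B * (2 * x) ^ p) by (rewrite Rpow_mult_distr; ring).
    apply Rmult_le_compat_l; [exact HB | apply pow_incr; lra]. }
  destruct (Rlt_le_dec (1 - 2 ^ p * B * x ^ p) 0) as [Hneg | Hnn].
  { pose proof (Rabs_pos (y - x)). pose proof (Rabs_pos (k y - k x)). nra. }
  destruct (Rtotal_order y x) as [Hlt | [-> | Hgt]].
  - specialize (Hk y x ltac:(lra) Hlt ltac:(lra)). specialize (Hpow x ltac:(lra)).
    rewrite (Rabs_left (y - x)), Rabs_left1 by nra. nra.
  - rewrite !Rminus_diag, Rabs_R0, Rmult_0_r. lra.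
  - specialize (Hk x y Hx Hgt ltac:(lra)). specialize (Hpow y Hy).
    rewrite (Rabs_right (y - x)), Rabs_right by nra. nra.
Qed.

Lemma orbit_bounds k p a B d x0 : 0 <= a -> 0 <= B -> B * d ^ p < 1 -> 0 < x0 <= d ->
  (forall y, 0 < y <= d -> k y <= y * (1 - a * y ^ p)) ->
  (forall y, 0 < y <= d -> y * (1 - B * y ^ p) <= k y) ->
  forall n, 0 < Nat.iter n k x0 <= x0.
Proof.
  intros Ha HB HBd Hx0 Hup Hlow. induction n as [|n IH]; [simpl; lra |].
  simpl. set (y := Nat.iter n k x0) in *.
  assert (Hy : 0 < y <= d) by lra.
  pose proof (Hup y Hy). pose proof (Hlow y Hy). pose proof (pow_le y p ltac:(lra)).
  assert (B * y ^ p <= B * d ^ p) by (apply Rmult_le_compat_l; [assumption | apply pow_incr; lra]).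
  assert (0 < y * (1 - B * y ^ p)) by (apply Rmult_lt_0_compat; lra).
  assert (0 <= a * y ^ p) by (apply Rmult_le_pos; assumption).
  split; nra.
Qed.

Lemma mvt_smooth k u v : smooth k -> u < v ->
  exists xi, u <= xi <= v /\ k v - k u = Derive k xi * (v - u).
Proof.
  intros Sk Huv. destruct (MVT_gen k u v (Derive k)) as [c [Hc E]].
  - intros x _. now apply Derive_correct, smooth_ex_derive.
  - intros x _. now apply smooth_continuity_pt.
  - rewrite Rmin_left, Rmax_right in Hc by lra. now exists c.
Qed.

Lemma mvt_lower k u v lo : smooth k -> u < v ->
  (forall xi, u <= xi <= v -> lo <= Derive k xi) -> lo * (v - u) <= k v - k u.
Proof.
  intros Sk Huv H. destruct (mvt_smooth k u v Sk Huv) as [xi [Hxi ->]].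
  apply Rmult_le_compat_r; [lra | auto].
Qed.

Lemma mvt_upper k u v hi : smooth k -> u < v ->
  (forall xi, u <= xi <= v -> Derive k xi <= hi) -> k v - k u <= hi * (v - u).
Proof.
  intros Sk Huv H. destruct (mvt_smooth k u v Sk Huv) as [xi [Hxi ->]].
  apply Rmult_le_compat_r; [lra | auto].
Qed.

Lemma pow_le_self y p : 0 <= y <= 1 -> (1 <= p)%nat -> y ^ p <= y.
Proof.
  intros Hy Hp. destruct p as [|p]; [lia |]. simpl.
  assert (y ^ p <= 1) by (rewrite <- (pow1 p); apply pow_incr; lra). nra.
Qed.

Lemma exists_small_radius p r M : (1 <= p)%nat -> 0 < r ->
  exists d, 0 < d <= r /\ M * d ^ p < 1.
Proof.
  intros Hp Hr. pose proof (Rabs_pos M).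
  set (d := Rmin r (Rmin 1 (/ (2 * (Rabs M + 1))))).
  pose proof (Rmin_l r (Rmin 1 (/ (2 * (Rabs M + 1))))).
  pose proof (Rmin_r r (Rmin 1 (/ (2 * (Rabs M + 1))))).
  pose proof (Rmin_l 1 (/ (2 * (Rabs M + 1)))). pose proof (Rmin_r 1 (/ (2 * (Rabs M + 1)))).
  fold d in H0, H1.
  assert (Hd : 0 < d) by (repeat apply Rmin_pos; try lra; apply Rinv_0_lt_compat; lra).
  exists d. split; [lra |].
  assert (Hdp : d ^ p <= d) by (apply pow_le_self; [lra | exact Hp]).
  pose proof (pow_le d p ltac:(lra)).
  assert ((Rabs M + 1) * d <= / 2).
  { apply Rle_trans with ((Rabs M + 1) * / (2 * (Rabs M + 1))); [apply Rmult_le_compat_l; lra |].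
    right. field. lra. }
  pose proof (Rle_abs M). nra.
Qed.

Lemma leading_term_bound k p c : c <> 0 ->
  is_bigO_pow (S p) (fun y => k y - (y + c * y ^ S p)) ->
  exists r, 0 < r /\ forall y, 0 < y <= r ->
    Rabs (k y - (y + c * y ^ S p)) <= Rabs c / 2 * y ^ S p.
Proof.
  intros Hc HO. destruct (is_bigO_pow_pos _ _ HO) as [K [rho [Hrho HK]]].
  pose proof (Rabs_pos K). pose proof (Rabs_pos_lt c Hc).
  set (r := Rmin (rho / 2) (Rabs c / (2 * (Rabs K + 1)))).
  pose proof (Rmin_l (rho / 2) (Rabs c / (2 * (Rabs K + 1)))).
  pose proof (Rmin_r (rho / 2) (Rabs c / (2 * (Rabs K + 1)))). fold r in H1, H2.
  exists r. split; [apply Rmin_pos; [lra | apply Rdiv_lt_0_compat; lra] |]. intros y Hy.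
  eapply Rle_trans; [apply HK; lra |].
  assert (HKy : Rabs K * y <= Rabs c / 2).
  { apply Rle_trans with ((Rabs K + 1) * (Rabs c / (2 * (Rabs K + 1)))).
    - apply Rmult_le_compat; lra.
    - right. field. lra. }
  pose proof (pow_le y (S p) ltac:(lra)). change (y ^ S (S p)) with (y * y ^ S p).
  rewrite <- Rmult_assoc. apply Rmult_le_compat_r; [assumption |].
  pose proof (Rle_abs K). nra.
Qed.

Lemma derivative_near1_bounds k n : smooth k ->
  is_bigO_pow n (fun y => Derive k y - 1) ->
  exists K r, 0 <= K /\ 0 < r /\ forall u v, 0 < u -> u < v -> v <= r ->
    (1 - K * v ^ S n) * (v - u) <= k v - k u <= (1 + K * v ^ S n) * (v - u).
Proof.
  intros Sk HO. destruct (is_bigO_pow_pos _ _ HO) as [K0 [rho [Hrho HK]]].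
  exists (Rabs K0), (rho / 2). split; [apply Rabs_pos | split; [lra |]].
  intros u v Hu Huv Hv.
  assert (Hxi : forall xi, u <= xi <= v -> Rabs (Derive k xi - 1) <= Rabs K0 * v ^ S n).
  { intros xi Hxi. eapply Rle_trans; [apply HK; lra |].
    apply Rle_trans with (Rabs K0 * xi ^ S n).
    - apply Rmult_le_compat_r; [apply pow_le; lra | apply Rle_abs].
    - apply Rmult_le_compat_l; [apply Rabs_pos | apply pow_incr; lra]. }
  split.
  - apply mvt_lower; [exact Sk | exact Huv |].
    intros xi H. specialize (Hxi xi H). apply Rabs_le_between' in Hxi. lra.
  - apply mvt_upper; [exact Sk | exact Huv |].
    intros xi H. specialize (Hxi xi H). apply Rabs_le_between' in Hxi. lra.
Qed.

Lemma increasing_inverse h hinv : (forall y, h (hinv y) = y) ->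
  (forall x y, x < y -> h x < h y) -> forall x y, x < y -> hinv x < hinv y.
Proof.
  intros Hi Hinc x y Hxy. destruct (Rlt_le_dec (hinv x) (hinv y)) as [| [Hlt | Heq]%Rle_lt_or_eq_dec];
    [assumption | apply Hinc in Hlt; rewrite !Hi in Hlt; lra |].
  apply (f_equal h) in Heq. rewrite !Hi in Heq. lra.
Qed.

Lemma decreasing_inverse f finv : (forall y, f (finv y) = y) ->
  (forall x y, x < y -> f y < f x) -> forall x y, x < y -> finv y < finv x.
Proof.
  intros Hi Hdec x y Hxy. destruct (Rlt_le_dec (finv y) (finv x)) as [| [Hlt | Heq]%Rle_lt_or_eq_dec];
    [assumption | apply Hdec in Hlt; rewrite !Hi in Hlt; lra |].
  apply (f_equal f) in Heq. rewrite !Hi in Heq. lra.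
Qed.

Section InverseOfExpansion.

Variables (k kinv : R -> R) (p : nat) (a B d : R).
Hypotheses (Ha : 0 <= a) (HB : 0 <= B) (Hd : 0 < d) (HBd : B * d ^ p <= 1).
Hypotheses (k_inv1 : forall x, kinv (k x) = x) (k_inv2 : forall y, k (kinv y) = y).
Hypotheses (k_incr : forall x y, x < y -> k x < k y) (k_0 : k 0 = 0).
Hypothesis k_expansion : forall x, 0 < x <= d -> x * (1 + a * x ^ p) <= k x <= x * (1 + B * x ^ p).
Hypothesis k_lipschitz : forall u v, 0 < u -> u < v -> v <= d ->
  k v - k u <= (1 + B * v ^ p) * (v - u).

Lemma B_pow_le1 y : 0 <= y <= d -> 0 <= B * y ^ p <= 1.
Proof.
  intros Hy. split; [apply Rmult_le_pos; [exact HB | apply pow_le; lra] |].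
  apply Rle_trans with (2 := HBd). apply Rmult_le_compat_l; [exact HB | apply pow_incr; lra].
Qed.

Lemma kinv_range y : 0 < y <= d -> 0 < kinv y <= y.
Proof.
  intros Hy. assert (Hik0 : kinv 0 = 0) by (rewrite <- k_0 at 1; apply k_inv1).
  assert (Hpos : 0 < kinv y)
    by (rewrite <- Hik0; apply (increasing_inverse k kinv k_inv2 k_incr); lra).
  split; [exact Hpos |].
  destruct (Rle_lt_dec (kinv y) y) as [| Hlt]; [assumption | exfalso].
  destruct (Rle_lt_dec (kinv y) d) as [Hle | Hgt].
  - destruct (k_expansion (kinv y) ltac:(lra)) as [Hlow _]. rewrite k_inv2 in Hlow.
    pose proof (Rmult_le_pos a (kinv y ^ p) Ha (pow_le (kinv y) p ltac:(lra))). nra.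
  - apply k_incr in Hgt. rewrite k_inv2 in Hgt. destruct (k_expansion d ltac:(lra)) as [Hlow _].
    pose proof (Rmult_le_pos a (d ^ p) Ha (pow_le d p ltac:(lra))). nra.
Qed.

(* [kinv y >= y / 2] costs the factor [2 ^ (p + 1)] in the contraction rate. *)
Lemma kinv_upper y : 0 < y <= d -> kinv y <= y * (1 - a / 2 ^ S p * y ^ p).
Proof.
  intros Hy. destruct (kinv_range y Hy) as [Hx1 Hx2]. set (x := kinv y) in *.
  assert (Ey : k x = y) by apply k_inv2.
  destruct (k_expansion x ltac:(lra)) as [Hlow Hup]. rewrite Ey in Hlow, Hup.
  destruct (B_pow_le1 x ltac:(lra)).
  assert (Hhalf : y / 2 <= x) by nra.
  assert (HP : (y / 2) ^ S p <= x ^ S p) by (apply pow_incr; lra).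
  replace ((y / 2) ^ S p) with (y ^ S p / 2 ^ S p) in HP
    by (unfold Rdiv; rewrite Rpow_mult_distr, pow_inv; ring).
  assert (a * (y ^ S p / 2 ^ S p) <= a * x ^ S p) by (apply Rmult_le_compat_l; assumption).
  replace (y * (1 - a / 2 ^ S p * y ^ p)) with (y - a * (y ^ S p / 2 ^ S p))
    by (simpl; field; apply pow_nonzero; lra).
  simpl in *. nra.
Qed.

Lemma kinv_lower y : 0 < y <= d -> y * (1 - B * y ^ p) <= kinv y.
Proof.
  intros Hy. destruct (kinv_range y Hy) as [Hx1 Hx2]. set (x := kinv y) in *.
  assert (Ey : k x = y) by apply k_inv2.
  destruct (k_expansion x ltac:(lra)) as [_ Hup]. rewrite Ey in Hup.
  destruct (B_pow_le1 y ltac:(lra)).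
  assert (B * x ^ p <= B * y ^ p) by (apply Rmult_le_compat_l; [exact HB | apply pow_incr; lra]).
  assert (y <= x * (1 + B * y ^ p)) by (apply Rle_trans with (1 := Hup); apply Rmult_le_compat_l; lra).
  assert (y * (1 - B * y ^ p) <= x * (1 + B * y ^ p) * (1 - B * y ^ p))
    by (apply Rmult_le_compat_r; lra).
  nra.
Qed.

Lemma kinv_lipschitz u v : 0 < u -> u < v -> v <= d ->
  (1 - B * v ^ p) * (v - u) <= kinv v - kinv u.
Proof.
  intros Hu Huv Hv. pose proof (kinv_range u ltac:(lra)). pose proof (kinv_range v ltac:(lra)).
  assert (Hlt : kinv u < kinv v) by now apply (increasing_inverse k kinv k_inv2 k_incr).
  pose proof (k_lipschitz (kinv u) (kinv v) ltac:(lra) Hlt ltac:(lra)) as Hlip.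
  rewrite !k_inv2 in Hlip. destruct (B_pow_le1 v ltac:(lra)).
  assert (B * kinv v ^ p <= B * v ^ p) by (apply Rmult_le_compat_l; [exact HB | apply pow_incr; lra]).
  assert (v - u <= (1 + B * v ^ p) * (kinv v - kinv u))
    by (apply Rle_trans with (1 := Hlip); apply Rmult_le_compat_r; lra).
  assert ((1 - B * v ^ p) * (v - u) <= (1 - B * v ^ p) * ((1 + B * v ^ p) * (kinv v - kinv u)))
    by (apply Rmult_le_compat_l; lra).
  assert (0 <= (B * v ^ p) ^ 2 * (kinv v - kinv u)) by (apply Rmult_le_pos; [apply pow2_ge_0 | lra]).
  nra.
Qed.

End InverseOfExpansion.

Section CommutingWithFlat.

Variable F : R -> R.
Hypothesis F_flat : forall N, is_bigO_pow N (fun y => F y - y).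
Hypothesis F_pos : forall y, 0 < y -> 0 < F y.
Hypothesis F_nontrivial : forall eps, 0 < eps -> exists y, 0 < y < eps /\ F y <> y.

Lemma F_le_double : exists rho, 0 < rho /\ forall y, 0 < y < rho -> F y <= 2 * y.
Proof.
  destruct (is_bigO_pow_pos _ _ (F_flat 1%nat)) as [C [rho [Hr HC]]].
  pose proof (Rabs_pos C).
  exists (Rmin rho (/ (Rabs C + 1))).
  split; [apply Rmin_pos; [exact Hr | apply Rinv_0_lt_compat; lra] |]. intros y Hy.
  pose proof (Rmin_l rho (/ (Rabs C + 1))). pose proof (Rmin_r rho (/ (Rabs C + 1))).
  specialize (HC y ltac:(lra)). apply Rabs_le_between' in HC.
  assert (y * (Rabs C + 1) < 1).
  { apply Rmult_lt_reg_r with (/ (Rabs C + 1)); [apply Rinv_0_lt_compat; lra |].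
    rewrite Rmult_assoc, Rinv_r, Rmult_1_l, Rmult_1_r by lra. lra. }
  assert (C * y ^ 2 <= Rabs C * y * y) by (pose proof (Rle_abs C); simpl; nra).
  simpl in HC. nra.
Qed.

(* The orbits [k^n x0] and [k^n (F x0) = F (k^n x0)] of the contraction [k] approach each
   other too slowly for the flatness of [F]. *)
Lemma no_commuting_contraction k p a B d :
  0 < a -> 0 <= B -> 0 < d -> a * d ^ p < 1 -> 2 ^ p * B * d ^ p < 1 ->
  (forall y, 0 < y <= d -> k y <= y * (1 - a * y ^ p)) ->
  (forall y, 0 < y <= d -> y * (1 - B * y ^ p) <= k y) ->
  (forall u v, 0 < u -> u < v -> v <= d -> (1 - B * v ^ p) * (v - u) <= k v - k u) ->
  (forall y, F (k y) = k (F y)) -> False.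
Proof.
  intros Ha HB Hd HaT HB2T Hup Hlow Hlip Hcom.
  set (T := d ^ p) in *. set (B2 := 2 ^ p * B) in *.
  assert (HT : 0 < T) by (apply pow_lt; lra).
  assert (H2p : 1 <= 2 ^ p) by (rewrite <- (pow1 p); apply pow_incr; lra).
  assert (HBT : B * T < 1) by (unfold B2 in HB2T; nra).
  destruct (exists_nat_mul_ge (1 + B2) (a * (1 - B2 * T)) ltac:(apply Rmult_lt_0_compat; lra))
    as [M HM].
  assert (HM' : 1 + B2 <= INR (S M) * a * (1 - B2 * T)).
  { rewrite S_INR. pose proof (Rmult_lt_0_compat a (1 - B2 * T) Ha ltac:(lra)). nra. }
  destruct (is_bigO_pow_pos _ _ (F_flat M)) as [C [rho [Hrho HC]]].
  destruct F_le_double as [rho2 [Hrho2 HF2]].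
  destruct (F_nontrivial (Rmin rho (Rmin rho2 (d / 2)))) as [x0 [[Hx0 Hx0'] Hfx0]];
    [repeat apply Rmin_pos; lra |].
  pose proof (Rmin_l rho (Rmin rho2 (d / 2))). pose proof (Rmin_r rho (Rmin rho2 (d / 2))).
  pose proof (Rmin_l rho2 (d / 2)). pose proof (Rmin_r rho2 (d / 2)).
  set (u := fun n => Nat.iter n k x0).
  assert (Hu : forall n, 0 < u n <= x0)
    by exact (orbit_bounds k p a B d x0 ltac:(lra) HB ltac:(unfold T in HBT; lra) ltac:(lra) Hup Hlow).
  assert (Ht : forall n, 0 <= u n ^ p <= T).
  { intros n. specialize (Hu n). split; [apply pow_le; lra | apply pow_incr; lra]. }
  assert (Hv : forall n, 0 < F (u n) <= 2 * u n).
  { intros n. specialize (Hu n). split; [apply F_pos; lra | apply HF2; lra]. }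
  assert (Hvs : forall n, F (u (S n)) = k (F (u n))) by (intros n; apply Hcom).
  apply (partial_prod_unbounded_of_decay u p a B T Ha HB HBT); try (intros n; specialize (Hu n)).
  - lra.
  - apply Ht.
  - apply Hup. lra.
  - apply Hlow. lra.
  - apply (partial_prod_bounded_of_gap u (fun n => Rabs (F (u n) - u n)) (fun n => u n ^ p)
             a B2 T C (S M)); auto.
    + unfold B2. nra.
    + intros n. apply Hu.
    + apply Rabs_pos_lt. simpl. lra.
    + intros n. rewrite Hvs. apply (gap_step k p B d HB Hlip); specialize (Hu n); try apply Hv; lra.
    + intros n. apply Hup. specialize (Hu n). lra.
    + intros n. specialize (Hu n). apply HC. lra.
Qed.

Lemma no_commuting_linear_contraction k : smooth k -> k 0 = 0 -> 0 < Derive k 0 < 1 ->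
  (forall y, F (k y) = k (F y)) -> False.
Proof.
  intros Sk Hk0 Hl Hcom. set (l := Derive k 0) in *.
  destruct (taylor_remainder_bigO _ 0 (smooth_Derive k Sk)) as [K [rho [Hrho HK]]].
  pose proof (Rabs_pos K).
  set (e := Rmin l (1 - l) / 2).
  assert (He : 0 < e) by (apply Rdiv_lt_0_compat; [apply Rmin_pos |]; lra).
  set (d := Rmin (rho / 2) (e / (Rabs K + 1))).
  assert (Hd : 0 < d) by (apply Rmin_pos; [lra | apply Rdiv_lt_0_compat; lra]).
  pose proof (Rmin_l (rho / 2) (e / (Rabs K + 1))). pose proof (Rmin_r (rho / 2) (e / (Rabs K + 1))).
  fold d in H0, H1.
  assert (HKd : Rabs K * d <= e).
  { apply Rle_trans with ((Rabs K + 1) * (e / (Rabs K + 1))); [apply Rmult_le_compat; lra |].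
    right. field. lra. }
  assert (Hderiv : forall xi, 0 <= xi <= d -> l / 2 <= Derive k xi <= (1 + l) / 2).
  { intros xi Hxi. specialize (HK xi ltac:(rewrite Rabs_right; lra)).
    unfold fps_trunc in HK. simpl in HK.
    rewrite taylor0_coef0, Rmult_1_r, (Rabs_right xi), Rmult_1_r in HK by lra.
    apply Rabs_le_between' in HK. pose proof (Rle_abs K).
    pose proof (Rmin_l l (1 - l)). pose proof (Rmin_r l (1 - l)).
    assert (K * xi <= Rabs K * d).
    { apply Rle_trans with (Rabs K * xi); [apply Rmult_le_compat_r |]; nra. }
    unfold e in *. fold l in HK. lra. }
  apply (no_commuting_contraction k 0 ((1 - l) / 2) (1 - l / 2) d); simpl; try lra.
  - intros y Hy. assert (k y - k 0 <= (1 + l) / 2 * (y - 0))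
      by (apply mvt_upper; [exact Sk | lra | intros; apply Hderiv; lra]). lra.
  - intros y Hy. assert (l / 2 * (y - 0) <= k y - k 0)
      by (apply mvt_lower; [exact Sk | lra | intros; apply Hderiv; lra]). lra.
  - intros u v Hu Huv Hv. replace (1 - (1 - l / 2) * 1) with (l / 2) by ring.
    apply mvt_lower; [exact Sk | lra | intros; apply Hderiv; lra].
  - exact Hcom.
Qed.

Lemma no_commuting_contracting_term k n c : c < 0 -> smooth k ->
  is_bigO_pow (S (S n)) (fun y => k y - (y + c * y ^ S (S n))) ->
  is_bigO_pow n (fun y => Derive k y - 1) ->
  (forall y, F (k y) = k (F y)) -> False.
Proof.
  intros Hc Sk Hexp Hder Hcom. set (p := S n) in *.
  destruct (leading_term_bound k p c ltac:(lra) Hexp) as [r1 [Hr1 H1]].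
  destruct (derivative_near1_bounds k n Sk Hder) as [K [r2 [HK [Hr2 H2]]]].
  set (a := - c / 2). set (B := - 3 * c / 2 + K).
  destruct (exists_small_radius p (Rmin r1 r2) (a + 2 ^ p * B + 1) ltac:(unfold p; lia)
              ltac:(apply Rmin_pos; assumption)) as [d [Hd Hsmall]].
  pose proof (Rmin_l r1 r2). pose proof (Rmin_r r1 r2).
  pose proof (pow_le d p ltac:(lra)). pose proof (pow_lt 2 p ltac:(lra)).
  assert (0 <= 2 ^ p * B * d ^ p) by (apply Rmult_le_pos; [apply Rmult_le_pos; unfold B |]; lra).
  assert (0 <= a * d ^ p) by (apply Rmult_le_pos; [unfold a |]; lra).
  rewrite Rabs_left in H1 by exact Hc.
  assert ((a + 2 ^ p * B + 1) * d ^ p = a * d ^ p + 2 ^ p * B * d ^ p + d ^ p) by ring.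
  apply (no_commuting_contraction k p a B d); try (unfold a, B; lra); [lra | lra | | | | exact Hcom].
  - intros y Hy. specialize (H1 y ltac:(lra)). apply Rabs_le_between' in H1.
    change (y ^ S p) with (y * y ^ p) in H1. unfold a. lra.
  - intros y Hy. specialize (H1 y ltac:(lra)). apply Rabs_le_between' in H1.
    pose proof (pow_le y p ltac:(lra)). assert (y * (K * y ^ p) >= 0)
      by (apply Rle_ge, Rmult_le_pos; [lra | apply Rmult_le_pos; assumption]).
    change (y ^ S p) with (y * y ^ p) in H1. unfold B. lra.
  - intros u v Hu Huv Hv. destruct (H2 u v Hu Huv ltac:(lra)) as [Hlow _].
    pose proof (pow_le v p ltac:(lra)).
    eapply Rle_trans; [| exact Hlow]. apply Rmult_le_compat_r; [lra |].
    unfold B. fold p. nra.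
Qed.

Lemma no_commuting_expanding_term k kinv n c : 0 < c -> smooth k ->
  (forall x, kinv (k x) = x) -> (forall y, k (kinv y) = y) ->
  (forall x y, x < y -> k x < k y) -> k 0 = 0 ->
  is_bigO_pow (S (S n)) (fun y => k y - (y + c * y ^ S (S n))) ->
  is_bigO_pow n (fun y => Derive k y - 1) ->
  (forall y, F (k y) = k (F y)) -> False.
Proof.
  intros Hc Sk Hi1 Hi2 Hinc Hk0 Hexp Hder Hcom. set (p := S n) in *.
  destruct (leading_term_bound k p c ltac:(lra) Hexp) as [r1 [Hr1 H1]].
  destruct (derivative_near1_bounds k n Sk Hder) as [K [r2 [HK [Hr2 H2]]]].
  set (a := c / 2). set (B := 3 * c / 2 + K).
  destruct (exists_small_radius p (Rmin r1 r2) (a + 2 ^ p * B + 1) ltac:(unfold p; lia)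
              ltac:(apply Rmin_pos; assumption)) as [d [Hd Hsmall]].
  pose proof (Rmin_l r1 r2). pose proof (Rmin_r r1 r2).
  pose proof (pow_le d p ltac:(lra)). pose proof (pow_lt 2 p ltac:(lra)).
  assert (H2p : 1 <= 2 ^ p) by (rewrite <- (pow1 p); apply pow_incr; lra).
  assert (0 <= 2 ^ p * B * d ^ p) by (apply Rmult_le_pos; [apply Rmult_le_pos; unfold B |]; lra).
  assert (0 <= a * d ^ p) by (apply Rmult_le_pos; [unfold a |]; lra).
  assert (B * d ^ p <= 2 ^ p * B * d ^ p)
    by (pose proof (Rmult_le_pos B (d ^ p) ltac:(unfold B; lra) ltac:(lra)); nra).
  assert ((a + 2 ^ p * B + 1) * d ^ p = a * d ^ p + 2 ^ p * B * d ^ p + d ^ p) by ring.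
  rewrite Rabs_right in H1 by lra.
  assert (Hexp' : forall x, 0 < x <= d -> x * (1 + a * x ^ p) <= k x <= x * (1 + B * x ^ p)).
  { intros x Hx. specialize (H1 x ltac:(lra)). apply Rabs_le_between' in H1.
    pose proof (pow_le x p ltac:(lra)). assert (x * (K * x ^ p) >= 0)
      by (apply Rle_ge, Rmult_le_pos; [lra | apply Rmult_le_pos; assumption]).
    change (x ^ S p) with (x * x ^ p) in H1. unfold a, B. split; lra. }
  assert (Hlip' : forall u v, 0 < u -> u < v -> v <= d -> k v - k u <= (1 + B * v ^ p) * (v - u)).
  { intros u v Hu Huv Hv. destruct (H2 u v Hu Huv ltac:(lra)) as [_ Hup].
    pose proof (pow_le v p ltac:(lra)).
    eapply Rle_trans; [exact Hup |]. apply Rmult_le_compat_r; [lra |].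
    unfold B. fold p. nra. }
  assert (Ha : 0 <= a) by (unfold a; lra). assert (HB : 0 <= B) by (unfold B; lra).
  assert (HBd : B * d ^ p <= 1) by lra.
  apply (no_commuting_contraction kinv p (a / 2 ^ S p) B d); try lra.
  - apply Rdiv_lt_0_compat; [unfold a; lra | apply pow_lt; lra].
  - apply Rle_lt_trans with (a * d ^ p); [| lra].
    apply Rmult_le_compat_r; [lra |]. unfold Rdiv.
    rewrite <- (Rmult_1_r a) at 2. apply Rmult_le_compat_l; [exact Ha |].
    rewrite <- Rinv_1. apply Rinv_le_contravar; [lra |]. change (2 ^ S p) with (2 * 2 ^ p). lra.
  - intros y Hy. now apply (kinv_upper k kinv p a B d).
  - intros y Hy. now apply (kinv_lower k kinv p a B d).
  - intros u v Hu Huv Hv. now apply (kinv_lipschitz k kinv p a B d).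
  - intros y. rewrite <- (Hi1 (F (kinv y))), <- Hcom, Hi2. reflexivity.
Qed.

End CommutingWithFlat.

Lemma taylor0_Derive u k : taylor0 (Derive u) k = INR (S k) * taylor0 u (S k).
Proof.
  unfold taylor0. rewrite <- Derive_n_S_Derive.
  change (Factorial.fact (S k)) with (S k * Factorial.fact k)%nat. rewrite mult_INR.
  field. split; [apply INR_fact_neq_0 | apply not_0_INR; lia].
Qed.

Lemma Derive_mul_Derive_inverse h hinv : smooth h -> smooth hinv -> (forall x, hinv (h x) = x) ->
  Derive h 0 * Derive hinv (h 0) = 1.
Proof.
  intros Sh Si Hi. rewrite <- (Derive_comp hinv h 0) by now apply smooth_ex_derive.
  rewrite (Derive_ext _ (fun x => x)) by exact Hi. apply Derive_id.
Qed.

Lemma Derive_nonneg_of_increasing h : smooth h -> (forall x y, x < y -> h x < h y) ->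
  forall x, 0 <= Derive h x.
Proof.
  intros Sh Hinc x.
  set (pr := fun t => ex_derive_Reals_0 h t (smooth_ex_derive h t Sh)).
  rewrite <- (Derive_Reals h x (pr x)). apply (nonneg_derivative_0 h pr).
  intros a b [Hlt | ->]%Rle_lt_or_eq_dec; [apply Rlt_le, Hinc, Hlt | lra].
Qed.

Lemma flat_of_taylor0_eq_X F : smooth F -> taylor0 F = fps_X ->
  forall N, is_bigO_pow N (fun y => F y - y).
Proof.
  intros SF TF N. apply is_bigO_pow_pred.
  apply (is_bigO_pow_ext _ (fun y => F y - fps_trunc (taylor0 F) (S N) y));
    [| now apply taylor_remainder_bigO].
  intros y. rewrite TF, fps_trunc_X by lia. reflexivity.
Qed.

Section CommutingDiffeo.

Variables F h hinv : R -> R.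
Hypothesis F_flat : forall N, is_bigO_pow N (fun y => F y - y).
Hypothesis F_pos : forall y, 0 < y -> 0 < F y.
Hypothesis F_nontrivial : forall eps, 0 < eps -> exists y, 0 < y < eps /\ F y <> y.
Hypotheses (Sh : smooth h) (Shinv : smooth hinv).
Hypotheses (h_inv1 : forall x, hinv (h x) = x) (h_inv2 : forall y, h (hinv y) = y).
Hypothesis h_incr : forall x y, x < y -> h x < h y.
Hypothesis h_0 : h 0 = 0.
Hypothesis h_comm : forall y, F (h y) = h (F y).

Lemma hinv_comm : forall y, F (hinv y) = hinv (F y).
Proof. intros y. now rewrite <- (h_inv1 (F (hinv y))), <- h_comm, h_inv2. Qed.

Lemma hinv_0 : hinv 0 = 0.
Proof. rewrite <- h_0 at 1. apply h_inv1. Qed.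

Lemma Derive_commuting_eq1 : Derive h 0 = 1.
Proof.
  pose proof (Derive_mul_Derive_inverse h hinv Sh Shinv h_inv1) as Hprod. rewrite h_0 in Hprod.
  pose proof (Derive_nonneg_of_increasing h Sh h_incr 0).
  pose proof (Derive_nonneg_of_increasing hinv Shinv (increasing_inverse h hinv h_inv2 h_incr) 0).
  destruct (Rtotal_order (Derive h 0) 1) as [Hlt | [Heq | Hgt]]; [exfalso | exact Heq | exfalso].
  - apply (no_commuting_linear_contraction F F_flat F_pos F_nontrivial h Sh h_0); [nra | exact h_comm].
  - apply (no_commuting_linear_contraction F F_flat F_pos F_nontrivial hinv Shinv hinv_0);
      [nra | exact hinv_comm].
Qed.

Lemma taylor0_commuting_next_coef_eq0 n :
  (forall j, (j <= S n)%nat -> taylor0 h j = fps_X j) -> taylor0 h (S (S n)) = 0.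
Proof.
  intros Hlow. set (c := taylor0 h (S (S n))).
  destruct (Req_dec c 0) as [| Hc]; [assumption | exfalso].
  assert (Hexp : is_bigO_pow (S (S n)) (fun y => h y - (y + c * y ^ S (S n)))).
  { apply (is_bigO_pow_ext _ (fun y => h y - fps_trunc (taylor0 h) (S (S n)) y));
      [| now apply taylor_remainder_bigO].
    intros y. rewrite fps_trunc_S, (fps_trunc_ext _ fps_X), fps_trunc_X by (auto; lia).
    reflexivity. }
  assert (Hder : is_bigO_pow n (fun y => Derive h y - 1)).
  { apply (is_bigO_pow_ext _ (fun y => Derive h y - fps_trunc (taylor0 (Derive h)) n y));
      [| now apply taylor_remainder_bigO, smooth_Derive].
    intros y. rewrite (fps_trunc_ext _ fps_one), fps_trunc_one; [reflexivity |].
    intros k Hk. rewrite taylor0_Derive, Hlow by lia. unfold fps_X, fps_one.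
    destruct k as [|k]; simpl; ring. }
  destruct (Rlt_le_dec c 0) as [Hneg | [Hpos | Heq]%Rle_lt_or_eq_dec]; [| | exact (Hc (eq_sym Heq))].
  - exact (no_commuting_contracting_term F F_flat F_pos F_nontrivial h n c Hneg Sh Hexp Hder h_comm).
  - exact (no_commuting_expanding_term F F_flat F_pos F_nontrivial h hinv n c Hpos Sh
             h_inv1 h_inv2 h_incr h_0 Hexp Hder h_comm).
Qed.

Lemma taylor0_commuting_eq_X : taylor0 h = fps_X.
Proof.
  assert (All : forall n j, (j <= n)%nat -> taylor0 h j = fps_X j).
  { induction n as [|n IH]; intros j Hj.
    - replace j with 0%nat by lia. now rewrite taylor0_coef0, h_0.
    - destruct (Nat.eq_dec j (S n)) as [-> | Hne]; [| apply IH; lia].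
      destruct n as [|n].
      + rewrite taylor0_coef1, Derive_commuting_eq1. reflexivity.
      + rewrite taylor0_commuting_next_coef_eq0 by exact IH. reflexivity. }
  apply functional_extensionality. intros n. now apply (All n).
Qed.

End CommutingDiffeo.

(** * The conjugacy criterion *)

Lemma fixed_point_decreasing g : (forall x y, x < y -> g y < g x) -> g 0 = 0 ->
  forall z, g z = z -> z = 0.
Proof.
  intros Hdec Hg0 z Hz. destruct (Rtotal_order z 0) as [Hlt | [| Hgt]]; [| assumption |].
  - pose proof (Hdec _ _ Hlt). lra.
  - pose proof (Hdec _ _ Hgt). lra.
Qed.

Lemma is_bigO_pow0_of_smooth u : smooth u -> u 0 = 0 -> is_bigO_pow 0 u.
Proof.
  intros Su Hu0. apply (is_bigO_pow_ext _ (fun y => u y - fps_trunc (taylor0 u) 0 y));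
    [| now apply taylor_remainder_bigO].
  intros y. unfold fps_trunc. simpl. rewrite taylor0_coef0, Hu0. ring.
Qed.

Lemma decreasing_injective f : (forall x y, x < y -> f y < f x) ->
  forall x y, f x = f y -> x = y.
Proof.
  intros Hdec x y E. destruct (Rtotal_order x y) as [Hlt | [| Hgt]]; [| assumption |].
  - pose proof (Hdec _ _ Hlt). lra.
  - pose proof (Hdec _ _ Hgt). lra.
Qed.

(* [f] commutes with [f o f] and maps the negative side to the positive one. *)
Lemma nonfixed_points_pos f : smooth f -> (forall x y, x < y -> f y < f x) -> f 0 = 0 ->
  boundary_point (fun x => f (f x) = x) 0 ->
  forall eps, 0 < eps -> exists y, 0 < y < eps /\ f (f y) <> y.
Proof.
  intros Sf Hdec Hf0 [_ Hbd] eps Heps.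
  destruct (is_bigO_pow0_of_smooth f Sf Hf0) as [L [rho [Hrho HL]]].
  pose proof (Rabs_pos L).
  set (e := Rmin rho (eps / (Rabs L + 1))).
  assert (He : 0 < e) by (apply Rmin_pos; [lra | apply Rdiv_lt_0_compat; lra]).
  pose proof (Rmin_l rho (eps / (Rabs L + 1))). pose proof (Rmin_r rho (eps / (Rabs L + 1))).
  fold e in H0, H1.
  assert (HLe : (Rabs L + 1) * e <= eps).
  { apply Rle_trans with ((Rabs L + 1) * (eps / (Rabs L + 1))); [apply Rmult_le_compat_l; lra |].
    right. field. lra. }
  destruct (Hbd e He) as [y [Hy Hny]]. rewrite Rminus_0_r in Hy.
  destruct (Rtotal_order y 0) as [Hneg | [-> | Hpos]].
  - exists (f y). split; [split |].
    + rewrite <- Hf0. now apply Hdec.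
    + specialize (HL y ltac:(lra)). simpl in HL. rewrite Rmult_1_r in HL.
      pose proof (Rle_abs (f y)). pose proof (Rle_abs L). pose proof (Rabs_pos y). nra.
    + intros E. apply Hny, (decreasing_injective f Hdec). exact E.
  - rewrite !Hf0 in Hny. lra.
  - exists y. rewrite Rabs_right in Hy by lra. split; [nra | exact Hny].
Qed.

Lemma taylor0_inverse_eq_X h hinv : smooth h -> smooth hinv -> (forall y, h (hinv y) = y) ->
  hinv 0 = 0 -> taylor0 h = fps_X -> taylor0 hinv = fps_X.
Proof.
  intros Sh Si Hi Hi0 Th.
  rewrite <- (fps_comp_X_l (taylor0 hinv)) by now rewrite taylor0_coef0.
  rewrite <- Th at 1. rewrite <- taylor0_comp by assumption.
  rewrite (taylor0_ext _ (fun x => x)) by exact Hi. apply taylor0_id.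
Qed.

Lemma taylor0_eq_of_conj f g h hinv : smooth f -> smooth g ->
  (forall x y, x < y -> f y < f x) -> (forall x y, x < y -> g y < g x) ->
  f 0 = 0 -> g 0 = 0 -> (forall x, f (f x) = g (g x)) ->
  fps_comp (taylor0 f) (taylor0 f) = fps_X ->
  boundary_point (fun x => f (f x) = x) 0 ->
  is_diffeo_with h hinv -> (forall x y, x < y -> h x < h y) ->
  (forall x, f x = hinv (g (h x))) -> taylor0 f = taylor0 g.
Proof.
  intros Sf Sg Hfd Hgd Hf0 Hg0 Hfg Hser Hbd [Sh [Si [Hi1 Hi2]]] Hinc Hconj.
  assert (Hhf : forall x, h (f x) = g (h x)) by (intros; now rewrite Hconj, Hi2).
  assert (Hh0 : h 0 = 0).
  { apply (fixed_point_decreasing g Hgd Hg0). now rewrite <- Hhf, Hf0. }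
  assert (Hi0 : hinv 0 = 0) by (rewrite <- Hh0 at 1; apply Hi1).
  assert (Th : taylor0 h = fps_X).
  { apply (taylor0_commuting_eq_X (fun x => f (f x)) h hinv); auto.
    - apply flat_of_taylor0_eq_X; [now apply smooth_comp |]. now rewrite taylor0_comp.
    - intros y Hy. rewrite <- Hf0 at 1. apply Hfd. rewrite <- Hf0. now apply Hfd.
    - now apply nonfixed_points_pos.
    - intros y. now rewrite Hfg, !Hhf. }
  assert (Ti : taylor0 hinv = fps_X) by now apply (taylor0_inverse_eq_X h hinv).
  rewrite (taylor0_ext g (fun x => h (f (hinv x)))) by (intros; now rewrite Hhf, Hi2).
  rewrite (taylor0_comp h (fun x => f (hinv x))), (taylor0_comp f hinv), Th, Ti, fps_comp_X_r,
    fps_comp_X_l; rewrite ?taylor0_coef0, ?Hi0; auto using smooth_comp.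
Qed.

Lemma taylor0_inverse_comp_eq_id f g ginv : smooth f -> smooth g -> smooth ginv ->
  (forall x, ginv (g x) = x) -> f 0 = 0 -> g 0 = 0 -> taylor0 f = taylor0 g ->
  taylor0 (fun x => ginv (f x)) = taylor0 (fun x => x).
Proof.
  intros Sf Sg Si Hi Hf0 Hg0 E.
  rewrite taylor0_comp, E, <- taylor0_comp by assumption. now apply taylor0_ext.
Qed.

Lemma decreasing_inverse_neg u uinv : (forall y, u (uinv y) = y) ->
  (forall x y, x < y -> u y < u x) -> u 0 = 0 -> forall y, 0 < y -> uinv y < 0.
Proof.
  intros Hi Hdec Hu0 y Hy.
  assert (Hi0 : uinv 0 = 0) by (apply (decreasing_injective u Hdec); now rewrite Hi, Hu0).
  rewrite <- Hi0. now apply (decreasing_inverse u uinv Hi Hdec).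
Qed.

Section GlueConjugacy.

Variables f finv g ginv : R -> R.
Hypotheses (f_inv1 : forall x, finv (f x) = x) (f_inv2 : forall y, f (finv y) = y).
Hypotheses (g_inv1 : forall x, ginv (g x) = x) (g_inv2 : forall y, g (ginv y) = y).
Hypotheses (f_decr : forall x y, x < y -> f y < f x) (g_decr : forall x y, x < y -> g y < g x).
Hypotheses (f_0 : f 0 = 0) (g_0 : g 0 = 0).

(* On the negative axis [ginv o f] conjugates [f] to [g]; on the positive axis the identity
   does, since there [f = finv o (f o f) = finv o (g o g)]. *)
Definition glue_conj : R -> R := glue (fun t => ginv (f t)) (fun t => t).
Definition glue_conj_inv : R -> R := glue (fun t => finv (g t)) (fun t => t).

Lemma glue_conj_neg x : x < 0 -> glue_conj x = ginv (f x) /\ ginv (f x) < 0.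
Proof.
  intros Hx. unfold glue_conj. rewrite glue_neg by exact Hx. split; [reflexivity |].
  apply (decreasing_inverse_neg g ginv g_inv2 g_decr g_0). rewrite <- f_0. now apply f_decr.
Qed.

Lemma glue_conj_inv_neg y : y < 0 -> glue_conj_inv y = finv (g y) /\ finv (g y) < 0.
Proof.
  intros Hy. unfold glue_conj_inv. rewrite glue_neg by exact Hy. split; [reflexivity |].
  apply (decreasing_inverse_neg f finv f_inv2 f_decr f_0). rewrite <- g_0. now apply g_decr.
Qed.

Lemma glue_conj_inv_l x : glue_conj_inv (glue_conj x) = x.
Proof.
  destruct (Rle_lt_dec 0 x) as [Hx | Hx].
  - unfold glue_conj_inv, glue_conj. now rewrite (glue_nonneg _ _ x), glue_nonneg.
  - destruct (glue_conj_neg x Hx) as [-> Hneg]. unfold glue_conj_inv.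
    now rewrite glue_neg, g_inv2, f_inv1.
Qed.

Lemma glue_conj_inv_r y : glue_conj (glue_conj_inv y) = y.
Proof.
  destruct (Rle_lt_dec 0 y) as [Hy | Hy].
  - unfold glue_conj_inv, glue_conj. now rewrite (glue_nonneg _ _ y), glue_nonneg.
  - destruct (glue_conj_inv_neg y Hy) as [-> Hneg]. unfold glue_conj.
    now rewrite glue_neg, f_inv2, g_inv1.
Qed.

Lemma glue_conj_incr x y : x < y -> glue_conj x < glue_conj y.
Proof.
  intros Hxy. destruct (Rle_lt_dec 0 y) as [Hy | Hy].
  - unfold glue_conj at 2. rewrite glue_nonneg by exact Hy. destruct (Rle_lt_dec 0 x) as [Hx | Hx].
    + unfold glue_conj. now rewrite glue_nonneg.
    + destruct (glue_conj_neg x Hx) as [-> Hneg]. lra.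
  - destruct (glue_conj_neg x ltac:(lra)) as [-> _]. destruct (glue_conj_neg y Hy) as [-> _].
    apply (decreasing_inverse g ginv g_inv2 g_decr), f_decr, Hxy.
Qed.

Lemma glue_conj_conj : (forall x, f (f x) = g (g x)) ->
  forall x, f x = glue_conj_inv (g (glue_conj x)).
Proof.
  intros Hfg x. destruct (Rtotal_order x 0) as [Hx | [-> | Hx]].
  - destruct (glue_conj_neg x Hx) as [-> _]. rewrite g_inv2.
    unfold glue_conj_inv. rewrite glue_nonneg; [reflexivity |].
    rewrite <- f_0. now apply Rlt_le, f_decr.
  - unfold glue_conj, glue_conj_inv. rewrite (glue_nonneg _ _ 0), g_0, glue_nonneg, f_0 by lra.
    reflexivity.
  - unfold glue_conj. rewrite glue_nonneg by lra. unfold glue_conj_inv.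
    rewrite glue_neg, <- Hfg, f_inv1; [reflexivity |]. rewrite <- g_0. now apply g_decr.
Qed.

Lemma smooth_glue_conj : smooth f -> smooth g -> smooth ginv -> taylor0 f = taylor0 g ->
  smooth glue_conj.
Proof.
  intros Sf Sg Si E. apply smooth_glue; [now apply smooth_comp | apply smooth_id |].
  apply Derive_n_eq_of_taylor0_eq. now apply taylor0_inverse_comp_eq_id with g.
Qed.

Lemma smooth_glue_conj_inv : smooth f -> smooth g -> smooth finv -> taylor0 f = taylor0 g ->
  smooth glue_conj_inv.
Proof.
  intros Sf Sg Si E. apply smooth_glue; [now apply smooth_comp | apply smooth_id |].
  apply Derive_n_eq_of_taylor0_eq. apply taylor0_inverse_comp_eq_id with f; auto.
Qed.

End GlueConjugacy.

Lemma conj_of_taylor0_eq f finv g ginv : is_diffeo_with f finv -> is_diffeo_with g ginv ->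
  (forall x y, x < y -> f y < f x) -> (forall x y, x < y -> g y < g x) ->
  f 0 = 0 -> g 0 = 0 -> (forall x, f (f x) = g (g x)) -> taylor0 f = taylor0 g ->
  exists h hinv, is_diffeo_with h hinv /\ diffeo_plus h /\ (forall x, f x = hinv (g (h x))).
Proof.
  intros [Sf [Sfi [Hf1 Hf2]]] [Sg [Sgi [Hg1 Hg2]]] Hfd Hgd Hf0 Hg0 Hfg E.
  assert (Hdiffeo : is_diffeo_with (glue_conj f ginv) (glue_conj_inv finv g)).
  { split; [| split; [| split]].
    - apply (smooth_glue_conj f g ginv); auto.
    - apply (smooth_glue_conj_inv f finv g); auto.
    - intros x. apply (glue_conj_inv_l f finv g ginv); auto.
    - intros y. apply (glue_conj_inv_r f finv g ginv); auto. }
  exists (glue_conj f ginv), (glue_conj_inv finv g). split; [exact Hdiffeo | split].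
  - split; [now exists (glue_conj_inv finv g) |]. intros x y. apply (glue_conj_incr f g ginv); auto.
  - intros x. apply (glue_conj_conj f finv g ginv); auto.
Qed.

Theorem theorem4p3 (f g : R -> R) :
  diffeo_minus f -> diffeo_minus g ->
  f 0 = 0 -> g 0 = 0 ->
  (forall x, f (f x) = g (g x)) ->
  fps_comp (taylor0 f) (taylor0 f) = fps_X ->
  boundary_point (fun x => f (f x) = x) 0 ->
  ((exists h hinv : R -> R,
      is_diffeo_with h hinv /\ diffeo_plus h /\ (forall x, f x = hinv (g (h x))))
   <-> taylor0 f = taylor0 g).
Proof.
  intros [[finv Hf] Hfd] [[ginv Hg] Hgd] Hf0 Hg0 Hfg Hser Hbd. split.
  - intros [h [hinv [Hh [[_ Hinc] Hconj]]]].
    apply (taylor0_eq_of_conj f g h hinv); try apply Hf; try apply Hg; assumption.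
  - intros E. now apply (conj_of_taylor0_eq f finv g ginv).
Qed.
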